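(* Let $\mathcal a>1$, $\mathcal b>0$, $1<\mathcal c<\tfrac32$, $t_0>0$, $\beta,\beta_0>0$, and let $f\in C^2([t_0,t_m))$ be the solution of $$f''+\frac{\mathcal a}{t}f'-\frac{\mathcal b}{t^2}f(1+f)-\frac{\mathcal c(f')^2}{1+f}=0,\qquad f(t_0)=\beta,\ f'(t_0)=\beta_0,$$ on its maximal interval of existence $[t_0,t_m)$. Let $\theta\ge1$ and $A>0$ with $A\theta<\frac{2\mathcal b}{3-2\mathcal c}$, let $g(t)=\exp\big(-A\int_{t_0}^t\frac{f(s)(1+f(s))}{s^2f'(s)}ds\big)$ and $\eta_\theta(t):=\frac{1}{g(t)^\theta(1+f(t))}$. Then $\eta_\theta\in C^1([t_0,t_m))$, there is $C_\star>0$ with $0<\eta_\theta(t)\le C_\star$ for all $t\in[t_0,t_m)$, and $\lim_{t\to t_m}\eta_\theta(t)=0$ (so $\eta_\theta$ extends continuously to $[t_0,t_m]$ with $\eta_\theta(t_m)=0$).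
   Context: It is known (from prior work) that $t_m\in(t_0,\infty]$, $f>0$, $f'>0$ on $[t_0,t_m)$, $f(t),f'(t)\to+\infty$ as $t\to t_m$, and, if $t_m=\infty$, $1+f(t)>\exp(\mathtt C t^{(\bar{\mathcal a}+\triangle)/2}+\mathtt D t^{-1})$ with $\mathtt C>0$, $\triangle=\sqrt{(1-\mathcal a)^2+4\mathcal b}$, $\bar{\mathcal a}=1-\mathcal a$; and that $\chi(t)=\frac{t^{2-\mathcal a}f'(t)}{(1+f(t))^{2-\mathcal c}f(t)g(t)^{\mathcal b/A}}$ is bounded on $[t_0,t_m)$. *)

From Stdlib Require Import Reals.
From Coquelicot Require Import Coquelicot.
Open Scope R_scope.

Definition Ico (a : R) (b : Rbar) (t : R) : Prop := a <= t /\ Rbar_lt t b.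

(* u' is the derivative of u on the set I, taken within I
   (so at the left endpoint of [a,b) it is the right derivative) *)
Definition deriv_within (I : R -> Prop) (u u' : R -> R) : Prop :=
  forall t, I t ->
    filterlim (fun s => (u s - u t) / (s - t))
      (within (fun s => I s /\ s <> t) (locally t)) (locally (u' t)).

Definition cont_within (I : R -> Prop) (u : R -> R) : Prop :=
  forall t, I t -> filterlim u (within I (locally t)) (locally (u t)).

Definition C1_on (I : R -> Prop) (u : R -> R) : Prop :=
  exists u', deriv_within I u u' /\ cont_within I u'.

Definition is_sol (a b c t0 beta beta0 : R) (t1 : Rbar) (f : R -> R) : Prop :=
  exists f1 f2 : R -> R,
    deriv_within (Ico t0 t1) f f1 /\
    deriv_within (Ico t0 t1) f1 f2 /\
    cont_within (Ico t0 t1) f2 /\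
    (forall t, Ico t0 t1 t ->
       1 + f t <> 0 /\
       f2 t + a / t * f1 t - b / t ^ 2 * f t * (1 + f t)
         - c * (f1 t) ^ 2 / (1 + f t) = 0) /\
    f t0 = beta /\ f1 t0 = beta0.

Definition is_max_sol (a b c t0 beta beta0 : R) (tm : Rbar) (f : R -> R) : Prop :=
  Rbar_lt t0 tm /\
  is_sol a b c t0 beta beta0 tm f /\
  ~ (exists (t1 : Rbar) (h : R -> R),
       Rbar_lt tm t1 /\ is_sol a b c t0 beta beta0 t1 h /\
       (forall t, Ico t0 tm t -> h t = f t)).

Definition gfun (A t0 : R) (f : R -> R) (t : R) : R :=
  exp (- A * RInt (fun s => f s * (1 + f s) / (s ^ 2 * Derive f s)) t0 t).

Definition eta (A theta t0 : R) (f : R -> R) (t : R) : R :=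
  / (Rpower (gfun A t0 f t) theta * (1 + f t)).

(* the filter "t -> tm, t < tm" on R (tm finite: left limit; tm = +oo: t -> +oo) *)
Definition to_left (tm : Rbar) : (R -> Prop) -> Prop :=
  within (fun t : R => Rbar_lt (Finite t) tm) (Rbar_locally' tm).

From Stdlib Require Import Reals Lra Lia Classical.
From Coquelicot Require Import Coquelicot.
Open Scope R_scope.

(** Write [G(t) = int_t0^t f (1 + f) / (s^2 f')] and [Lam = theta A G - ln (1 + f)],
    so that [eta = exp Lam] on [[t0, tm)]; [eta] is then C^1 by the chain rule.
    Everything rests on two facts about the solution [f]:

    - blow-up: [f -> +oo] at [tm].  The logarithmic velocity [v = t f'/(1 + f)]
      stays above some [m > 0].  If [tm = +oo] this gives [ln (1 + f) >= m ln t].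
      If [tm] is finite and [f] stayed bounded, [f'] and [f''] would be bounded
      too, and Picard iteration for a clamped (bounded, Lipschitz) version of the
      equation, started close to [tm], would continue the solution past [tm],
      contradicting maximality;
    - the quantity [phi = t^2 f'^2 / ((1 + f)^2 f)] satisfies
      [phi' = (f'/(1 + f)) (2b - 2(a - 1) v/f - (3 - 2c) phi - phi/f)], so once
      [f] is large it eventually exceeds a level [k1 > A theta] and stays above.
      Since [G' = (ln (1 + f))' / phi], from then on
      [Lam' <= -(1 - A theta / k1) (ln (1 + f))'], so [Lam] is bounded above and
      tends to [-oo], i.e. [eta] is bounded and tends to [0]. *)

Lemma locally_eps (x : R) (P : R -> Prop) :
  locally x P <-> exists d, 0 < d /\ forall y, Rabs (y - x) < d -> P y.
Proof.
  split.
  - intros [e He]. exists e. split; [apply cond_pos | intros y Hy; apply He, Hy].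
  - intros [d [Hd H]]. exists (mkposreal d Hd). intros y Hy. apply H, Hy.
Qed.

Lemma within_eps (D : R -> Prop) (t : R) (P : R -> Prop) :
  within D (locally t) P <-> exists d, 0 < d /\ forall y, Rabs (y - t) < d -> D y -> P y.
Proof. unfold within. apply locally_eps. Qed.

Lemma below_tm (s t : R) (tm : Rbar) : s <= t -> Rbar_lt t tm -> Rbar_lt s tm.
Proof. destruct tm; simpl; intros; lra. Qed.

Lemma room_below (t : R) (tm : Rbar) : Rbar_lt t tm ->
  exists d, 0 < d /\ forall s, s < t + d -> Rbar_lt s tm.
Proof.
  destruct tm as [r| |]; simpl; intros H.
  - exists (r - t). split; [lra | intros; lra].
  - exists 1. split; [lra | auto].
  - contradiction.
Qed.

(** Continuity combinators for real functions (fixing Coquelicot's implicit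
    structures to [R]). *)
Lemma cR_plus (f g : R -> R) x :
  continuous f x -> continuous g x -> continuous (fun y => f y + g y) x.
Proof. intros. apply (continuous_plus (V:=R_NormedModule)); auto. Qed.
Lemma cR_mult (f g : R -> R) x :
  continuous f x -> continuous g x -> continuous (fun y => f y * g y) x.
Proof. intros. apply (continuous_mult (K:=R_AbsRing)); auto. Qed.
Lemma cR_minus (f g : R -> R) x :
  continuous f x -> continuous g x -> continuous (fun y => f y - g y) x.
Proof. intros. apply (continuous_minus (V:=R_NormedModule)); auto. Qed.
Lemma cR_div (f g : R -> R) x :
  continuous f x -> continuous g x -> g x <> 0 -> continuous (fun y => f y / g y) x.
Proof. intros. apply cR_mult; auto. apply continuous_Rinv_comp; auto. Qed.
Lemma cR_const (c x : R) : continuous (fun _ : R => c) x.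
Proof. apply continuous_const. Qed.
Lemma cR_id (x : R) : continuous (fun y : R => y) x.
Proof. apply continuous_id. Qed.
Lemma cR_scal (k : R) (f : R -> R) x : continuous f x -> continuous (fun y => k * f y) x.
Proof. intros. apply (cR_mult (fun _ => k)); auto. apply cR_const. Qed.
Lemma cR_pow (f : R -> R) n x : continuous f x -> continuous (fun y => f y ^ n) x.
Proof. intros H. induction n; simpl; [apply cR_const | apply cR_mult; auto]. Qed.
Lemma cR_exp (f : R -> R) x : continuous f x -> continuous (fun y => exp (f y)) x.
Proof. apply continuous_exp_comp. Qed.
Lemma cR_ln (f : R -> R) x : continuous f x -> 0 < f x -> continuous (fun y => ln (f y)) x.
Proof. intros. apply (continuous_comp f ln); auto. apply continuous_ln; auto. Qed.

Lemma is_derive_continuous (u : R -> R) (t l : R) : is_derive u t l -> continuous u t.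
Proof. intros H. apply (ex_derive_continuous (K:=R_AbsRing) (V:=R_NormedModule)). exists l; exact H. Qed.

Lemma continuous_eps (u : R -> R) (t : R) : continuous u t ->
  forall e, 0 < e -> exists d, 0 < d /\ forall s, Rabs (s - t) < d -> Rabs (u s - u t) < e.
Proof.
  intros H e He. apply filterlim_locally with (eps := mkposreal e He) in H.
  apply locally_eps in H. destruct H as [d [Hd H]]. exists d. split; auto.
Qed.

Lemma lip1_continuous (g : R -> R) : (forall x y, Rabs (g x - g y) <= Rabs (x - y)) ->
  forall x, continuous g x.
Proof.
  intros H x. apply filterlim_locally. intros e. apply locally_eps. exists e.
  split; [apply cond_pos |]. intros y Hy. change (Rabs (g y - g x) < e).
  eapply Rle_lt_trans; [apply H | auto].
Qed.

Definition right_cont (T : R) (u : R -> R) := forall e, 0 < e ->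
  exists d, 0 < d /\ forall s, T <= s < T + d -> Rabs (u s - u T) < e.

Lemma continuous_right_cont (T : R) (u : R -> R) : continuous u T -> right_cont T u.
Proof.
  intros H e He. destruct (continuous_eps u T H e He) as [d [Hd H']].
  exists d. split; auto. intros s Hs. apply H'. rewrite Rabs_right; lra.
Qed.

Lemma right_cont_freeze (T : R) (u : R -> R) :
  right_cont T u -> continuous (fun s => u (Rmax s T)) T.
Proof.
  intros H. apply filterlim_locally. intros e. apply locally_eps.
  destruct (H e (cond_pos e)) as [d [Hd H']]. exists d. split; auto.
  intros y Hy. rewrite (Rmax_right T T) by lra.
  change (Rabs (u (Rmax y T) - u T) < e). destruct (Rle_or_lt y T).
  - rewrite Rmax_right, Rminus_diag, Rabs_R0 by lra. apply cond_pos.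
  - rewrite Rmax_left by lra. apply H'. apply Rabs_def2 in Hy. lra.
Qed.

Lemma right_cont_of_freeze (T : R) (u : R -> R) :
  continuous (fun s => u (Rmax s T)) T -> right_cont T u.
Proof.
  intros H e He. destruct (continuous_eps _ T H e He) as [d [Hd H']].
  exists d. split; auto. intros s Hs. specialize (H' s).
  rewrite Rmax_left, Rmax_right in H' by lra. apply H'. rewrite Rabs_right; lra.
Qed.

Lemma Rmax_continuous (T x : R) : continuous (fun s => Rmax s T) x.
Proof. apply lip1_continuous. intros. unfold Rmax. repeat destruct Rle_dec; split_Rabs; lra. Qed.

Lemma ln_le_compat (x y : R) : 0 < x -> x <= y -> ln x <= ln y.
Proof. intros Hx [H|<-]; [left; apply ln_increasing; auto | lra]. Qed.

Lemma exp_le_compat (x y : R) : x <= y -> exp x <= exp y.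
Proof. intros [H|<-]; [left; apply exp_increasing; auto | lra]. Qed.

Lemma continuous_induction (T : R) (tm : Rbar) (Q : R -> Prop) :
  (forall t, T <= t -> Rbar_lt t tm -> (forall s, T <= s < t -> Q s) ->
     exists d, 0 < d /\ forall s, t <= s < t + d -> Rbar_lt s tm -> Q s) ->
  forall t, T <= t -> Rbar_lt t tm -> Q t.
Proof.
  intros H ts H1 H2. apply NNPP. intros Hn.
  set (E := fun x => T <= x <= ts /\ forall s, T <= s < x -> Q s).
  assert (Hb : bound E) by (exists ts; intros x [Hx _]; lra).
  assert (He : exists x, E x) by (exists T; split; [lra | intros; lra]).
  destruct (completeness E Hb He) as [S [HS1 HS2]].
  assert (HTS : T <= S) by (apply HS1; split; [lra | intros; lra]).
  assert (HSt : S <= ts) by (apply HS2; intros x [Hx _]; lra).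
  assert (HQ : forall s, T <= s < S -> Q s).
  { intros s Hs. apply NNPP. intros Hq.
    assert (S <= s); [| lra].
    apply HS2. intros x [Hx Hx']. destruct (Rle_or_lt x s) as [h|h]; auto.
    exfalso. apply Hq, Hx'. lra. }
  destruct (H S HTS (below_tm _ _ _ HSt H2) HQ) as [d [Hd Hs]].
  destruct (Rlt_or_le ts (S + d)) as [h|h].
  - apply Hn, Hs; [lra | exact H2].
  - assert (HE : E (S + d/2)).
    { split; [lra |]. intros s Hs'. destruct (Rlt_or_le s S); [apply HQ; lra |].
      apply Hs; [lra | apply below_tm with ts; auto; lra]. }
    assert (S + d/2 <= S) by (apply HS1; auto). lra.
Qed.

Lemma is_derive_pos_left (u : R -> R) (t l : R) : is_derive u t l -> 0 < l ->
  exists d, 0 < d /\ forall s, t - d < s < t -> u s < u t.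
Proof.
  intros H Hl. apply is_derive_Reals in H.
  destruct (H l Hl) as [d Hd]. exists d. split; [apply cond_pos |].
  intros s Hs. specialize (Hd (s - t)). replace (t + (s - t)) with s in Hd by ring.
  assert (Hq : Rabs ((u s - u t) / (s - t) - l) < l) by (apply Hd; [lra | rewrite Rabs_left; lra]).
  apply Rabs_def2 in Hq.
  destruct (Rle_or_lt (u t) (u s)) as [h|h]; [| exact h].
  assert ((u s - u t) / (s - t) <= 0); [| lra].
  unfold Rdiv. assert (/ (s - t) < 0) by (apply Rinv_lt_0_compat; lra). nra.
Qed.

Lemma point_left_of (T t d : R) : T < t -> 0 < d ->
  exists s, T < s < t /\ Rabs (s - t) < d /\ t - d < s.
Proof.
  intros HT Hd. exists (t - Rmin d (t - T) / 2).
  assert (0 < Rmin d (t - T)) by (apply Rmin_glb_lt; lra).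
  assert (Rmin d (t - T) <= d) by apply Rmin_l. assert (Rmin d (t - T) <= t - T) by apply Rmin_r.
  split; [lra | split; [rewrite Rabs_left |]; lra].
Qed.

Lemma strict_lower_barrier (T : R) (tm : Rbar) (u u' : R -> R) (m : R) :
  right_cont T u ->
  (forall t, T < t -> Rbar_lt t tm -> is_derive u t (u' t)) -> m < u T ->
  (forall t, T < t -> Rbar_lt t tm -> (forall s, T <= s < t -> m < u s) ->
     u t = m -> 0 < u' t) ->
  forall t, T <= t -> Rbar_lt t tm -> m < u t.
Proof.
  intros Hrc Hd Hm Hb. apply continuous_induction.
  intros t Ht Htm HQ. destruct (Req_dec t T) as [->|hne].
  - destruct (Hrc (u T - m)) as [d [Hd0 Hd1]]; [lra |].
    exists d. split; auto. intros s Hs _. specialize (Hd1 s Hs). apply Rabs_def2 in Hd1. lra.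
  - assert (HtT : T < t) by lra.
    assert (Hc : continuous u t) by (eapply is_derive_continuous; apply Hd; auto).
    assert (Hut : m < u t).
    { destruct (Rtotal_order m (u t)) as [h|[h|h]]; auto; exfalso.
      - destruct (is_derive_pos_left u t (u' t) (Hd t HtT Htm)) as [d [Hd0 Hd1]].
        { apply Hb; auto. }
        destruct (point_left_of T t d HtT Hd0) as [s [Hs1 [_ Hs3]]].
        assert (u s < u t) by (apply Hd1; lra). assert (m < u s) by (apply HQ; lra). lra.
      - destruct (continuous_eps u t Hc (m - u t)) as [d [Hd0 Hd1]]; [lra |].
        destruct (point_left_of T t d HtT Hd0) as [s [Hs1 [Hs2 _]]].
        specialize (Hd1 s Hs2). apply Rabs_def2 in Hd1. assert (m < u s) by (apply HQ; lra). lra. }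
    destruct (continuous_eps u t Hc (u t - m)) as [d [Hd0 Hd1]]; [lra |].
    exists d. split; auto. intros s Hs _.
    assert (HH : Rabs (u s - u t) < u t - m) by (apply Hd1; rewrite Rabs_right; lra).
    apply Rabs_def2 in HH. lra.
Qed.

(** Monotonicity on a compact interval [[T, t]] from a nonnegative derivative on
    [(T, t)], with only right continuity at [T] (mean value theorem applied to the
    function frozen to the left of [T]). *)
Lemma nondecreasing_closed (T t : R) (u u' : R -> R) :
  T <= t -> right_cont T u ->
  (forall s, T < s <= t -> is_derive u s (u' s)) ->
  (forall s, T < s < t -> 0 <= u' s) -> u T <= u t.
Proof.
  intros HT Hrc Hd Hp. destruct (Req_dec T t) as [<-|hne]; [lra |].
  set (w := fun s => u (Rmax s T)).
  set (dw := fun s => if Rlt_dec T s then (if Rlt_dec s t then u' s else 0) else 0).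
  assert (Hw : forall s, T < s -> locally s (fun y => u y = w y)).
  { intros s Hs. apply locally_eps. exists (s - T). split; [lra |].
    intros y Hy. apply Rabs_def2 in Hy. unfold w. rewrite Rmax_left by lra. reflexivity. }
  destruct (MVT_gen w T t dw) as [x [_ E]]; rewrite ?Rmin_left, ?Rmax_right by lra.
  - intros x Hx. apply (is_derive_ext_loc u); [apply Hw; lra |].
    unfold dw. destruct (Rlt_dec T x); [| lra]. destruct (Rlt_dec x t); [| lra]. apply Hd; lra.
  - intros x Hx. apply continuity_pt_filterlim. destruct (Req_dec x T) as [->|hx].
    + apply right_cont_freeze, Hrc.
    + apply continuous_ext_loc with (g := u); [apply Hw; lra |].
      eapply is_derive_continuous. apply Hd. lra.
  - unfold w in E. rewrite Rmax_left, Rmax_right in E by lra.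
    assert (0 <= dw x); [| nra].
    unfold dw. destruct (Rlt_dec T x); [| lra]. destruct (Rlt_dec x t); [| lra]. apply Hp; lra.
Qed.

Lemma nondecreasing_of_deriv (T : R) (tm : Rbar) (u u' : R -> R) :
  right_cont T u ->
  (forall t, T < t -> Rbar_lt t tm -> is_derive u t (u' t)) ->
  (forall t, T < t -> Rbar_lt t tm -> 0 <= u' t) ->
  forall t, T <= t -> Rbar_lt t tm -> u T <= u t.
Proof.
  intros Hrc Hd Hp t Ht Htm. apply (nondecreasing_closed T t u u'); auto.
  - intros s Hs. apply Hd; [lra | apply below_tm with t; auto; lra].
  - intros s Hs. apply Hp; [lra | apply below_tm with t; auto; lra].
Qed.

Lemma comparison_of_deriv (T : R) (tm : Rbar) (w w' u u' : R -> R) (k : R) :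
  (forall t, T <= t -> Rbar_lt t tm -> is_derive w t (w' t)) ->
  (forall t, T <= t -> Rbar_lt t tm -> is_derive u t (u' t)) ->
  (forall t, T < t -> Rbar_lt t tm -> k * u' t <= w' t) ->
  forall t, T <= t -> Rbar_lt t tm -> w T + k * (u t - u T) <= w t.
Proof.
  intros Hw Hu Hk t Ht Htm.
  assert (HT : Rbar_lt T tm) by (apply below_tm with t; auto).
  assert (H : w T - k * u T <= w t - k * u t); [| lra].
  apply (nondecreasing_of_deriv T tm (fun s => w s - k * u s) (fun s => w' s - k * u' s));
    auto.
  - apply continuous_right_cont, cR_minus; [| apply cR_scal];
      eapply is_derive_continuous; [apply Hw | apply Hu]; auto; lra.
  - intros s Hs1 Hs2. apply (is_derive_minus (V:=R_NormedModule));
      [apply Hw | apply is_derive_scal, Hu]; auto; lra.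
  - intros s Hs1 Hs2. specialize (Hk s Hs1 Hs2). lra.
Qed.

Lemma deriv_within_interior (t0 : R) (tm : Rbar) (u u' : R -> R) (t : R) :
  deriv_within (Ico t0 tm) u u' -> t0 < t -> Rbar_lt t tm -> is_derive u t (u' t).
Proof.
  intros H Ht Htm. apply is_derive_Reals. intros e He.
  specialize (H t (conj (Rlt_le _ _ Ht) Htm)).
  apply filterlim_locally with (eps := mkposreal e He) in H.
  apply within_eps in H. destruct H as [d [Hd H]].
  destruct (room_below t tm Htm) as [d2 [Hd2 H2]].
  assert (Hm : 0 < Rmin d (Rmin (t - t0) d2)) by (repeat apply Rmin_glb_lt; lra).
  exists (mkposreal _ Hm). intros h Hh0 Hh. simpl in Hh.
  assert (Rmin d (Rmin (t - t0) d2) <= d) by apply Rmin_l.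
  assert (Rmin (t - t0) d2 <= t - t0) by apply Rmin_l.
  assert (Rmin (t - t0) d2 <= d2) by apply Rmin_r.
  assert (Rmin d (Rmin (t - t0) d2) <= Rmin (t - t0) d2) by apply Rmin_r.
  apply Rabs_def2 in Hh.
  specialize (H (t + h)). replace (t + h - t) with h in H by ring.
  apply H; [apply Rabs_def1; lra | repeat split; [lra | apply H2; lra | lra]].
Qed.

Lemma cont_within_interior (t0 : R) (tm : Rbar) (u : R -> R) (t : R) :
  cont_within (Ico t0 tm) u -> t0 < t -> Rbar_lt t tm -> continuous u t.
Proof.
  intros H Ht Htm. apply filterlim_locally. intros e.
  specialize (H t (conj (Rlt_le _ _ Ht) Htm)). apply filterlim_locally with (eps := e) in H.
  apply within_eps in H. destruct H as [d [Hd H]].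
  destruct (room_below t tm Htm) as [d2 [Hd2 H2]].
  apply locally_eps. exists (Rmin d (Rmin (t - t0) d2)).
  split; [repeat apply Rmin_glb_lt; lra |]. intros y Hy.
  assert (Rmin d (Rmin (t - t0) d2) <= d) by apply Rmin_l.
  assert (Rmin (t - t0) d2 <= t - t0) by apply Rmin_l.
  assert (Rmin (t - t0) d2 <= d2) by apply Rmin_r.
  assert (Rmin d (Rmin (t - t0) d2) <= Rmin (t - t0) d2) by apply Rmin_r.
  apply Rabs_def2 in Hy. apply H; [apply Rabs_def1; lra | split; [lra | apply H2; lra]].
Qed.

Lemma cont_within_left_end (t0 : R) (tm : Rbar) (u : R -> R) :
  cont_within (Ico t0 tm) u -> Rbar_lt t0 tm -> right_cont t0 u.
Proof.
  intros H Htm e He.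
  specialize (H t0 (conj (Rle_refl t0) Htm)).
  apply filterlim_locally with (eps := mkposreal e He) in H.
  apply within_eps in H. destruct H as [d [Hd H]].
  destruct (room_below t0 tm Htm) as [d2 [Hd2 H2]].
  exists (Rmin d d2). split; [apply Rmin_glb_lt; auto |]. intros s Hs.
  assert (Rmin d d2 <= d) by apply Rmin_l. assert (Rmin d d2 <= d2) by apply Rmin_r.
  apply H; [rewrite Rabs_right; lra | split; [lra | apply H2; lra]].
Qed.

Lemma deriv_within_cont (I : R -> Prop) (u u' : R -> R) :
  deriv_within I u u' -> cont_within I u.
Proof.
  intros H t Ht. specialize (H t Ht).
  apply filterlim_locally. intros e.
  apply filterlim_locally with (eps := mkposreal 1 Rlt_0_1) in H.
  apply within_eps in H. destruct H as [d [Hd H]]. apply within_eps.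
  set (K := Rabs (u' t) + 1).
  assert (HK : 0 < K) by (unfold K; generalize (Rabs_pos (u' t)); lra).
  assert (He : 0 < e) by apply cond_pos.
  exists (Rmin d (e / K)). split; [apply Rmin_glb_lt; auto; apply Rdiv_lt_0_compat; auto |].
  intros y Hy HIy. change (Rabs (u y - u t) < e).
  assert (Rmin d (e / K) <= d) by apply Rmin_l. assert (Rmin d (e / K) <= e / K) by apply Rmin_r.
  destruct (Req_dec y t) as [->|hne]; [rewrite Rminus_diag, Rabs_R0; auto |].
  assert (Hq : Rabs ((u y - u t) / (y - t) - u' t) < 1) by (apply H; [lra | split; auto]).
  assert (Hq' : Rabs ((u y - u t) / (y - t)) <= K).
  { unfold K. replace ((u y - u t) / (y - t)) with (((u y - u t) / (y - t) - u' t) + u' t) by ring.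
    eapply Rle_trans; [apply Rabs_triang | lra]. }
  replace (u y - u t) with ((u y - u t) / (y - t) * (y - t)) by (field; lra).
  rewrite Rabs_mult. apply Rle_lt_trans with (K * Rabs (y - t)).
  - apply Rmult_le_compat_r; [apply Rabs_pos | exact Hq'].
  - apply Rlt_le_trans with (K * (e / K)); [apply Rmult_lt_compat_l; lra | right; field; lra].
Qed.

Lemma deriv_within_of_is_derive (I : R -> Prop) (u w w' : R -> R) :
  (forall t, I t -> is_derive w t (w' t)) -> (forall t, I t -> u t = w t) ->
  deriv_within I u w'.
Proof.
  intros Hd He t Ht. apply filterlim_locally. intros e. apply within_eps.
  specialize (Hd t Ht). apply is_derive_Reals in Hd.
  destruct (Hd e (cond_pos e)) as [d Hdd]. exists d. split; [apply cond_pos |].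
  intros y Hy [HIy Hne]. change (Rabs ((u y - u t) / (y - t) - w' t) < e).
  rewrite !He by auto. specialize (Hdd (y - t)). replace (t + (y - t)) with y in Hdd by ring.
  apply Hdd; [lra | auto].
Qed.

Lemma cont_within_of_continuous (I : R -> Prop) (u w : R -> R) :
  (forall t, I t -> continuous w t) -> (forall t, I t -> u t = w t) -> cont_within I u.
Proof.
  intros Hc He t Ht. apply filterlim_locally. intros e. apply within_eps.
  destruct (continuous_eps w t (Hc t Ht) e (cond_pos e)) as [d [Hd H]].
  exists d. split; auto. intros y Hy HIy. change (Rabs (u y - u t) < e).
  rewrite !He by auto. apply H; auto.
Qed.

Lemma continuous_freeze (t0 : R) (tm : Rbar) (u : R -> R) :
  right_cont t0 u -> (forall t, t0 < t -> Rbar_lt t tm -> continuous u t) ->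
  forall t : R, Rbar_lt t tm -> continuous (fun s => u (Rmax s t0)) t.
Proof.
  intros Hr Hc t Ht. destruct (Rtotal_order t t0) as [h|[->|h]].
  - apply continuous_ext_loc with (g := fun _ => u t0); [| apply cR_const].
    apply locally_eps. exists (t0 - t). split; [lra |]. intros y Hy.
    apply Rabs_def2 in Hy. rewrite Rmax_right by lra. reflexivity.
  - apply right_cont_freeze, Hr.
  - apply continuous_ext_loc with (g := u); [| apply Hc; auto].
    apply locally_eps. exists (t - t0). split; [lra |]. intros y Hy.
    apply Rabs_def2 in Hy. rewrite Rmax_left by lra. reflexivity.
Qed.

Lemma to_left_eventually (t0 : R) (tm : Rbar) (P : R -> Prop) :
  Rbar_lt t0 tm -> to_left tm P ->
  exists T, t0 < T /\ Rbar_lt T tm /\ forall s, T <= s -> Rbar_lt s tm -> P s.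
Proof.
  intros Htm H. unfold to_left, within in H. destruct tm as [r| |]; simpl in *.
  - destruct H as [d Hd]. set (T := Rmax ((t0 + r) / 2) (r - d / 2)).
    assert ((t0 + r)/2 <= T) by apply Rmax_l. assert (r - d/2 <= T) by apply Rmax_r.
    assert (0 < d) by apply cond_pos. assert (T < r) by (apply Rmax_lub_lt; lra).
    exists T. split; [lra | split; auto]. intros s Hs1 Hs2. apply Hd; auto; [| lra].
    change (Rabs (s - r) < d). rewrite Rabs_left; lra.
  - destruct H as [M HM]. set (T := Rmax (t0 + 1) (M + 1)).
    assert (t0 + 1 <= T) by apply Rmax_l. assert (M + 1 <= T) by apply Rmax_r.
    exists T. split; [lra | split; auto]. intros s Hs _. apply HM; auto. lra.
  - contradiction.
Qed.

Lemma to_left_of_tail (T : R) (tm : Rbar) (P : R -> Prop) :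
  Rbar_lt T tm -> (forall s, T <= s -> Rbar_lt s tm -> P s) -> to_left tm P.
Proof.
  intros HT H. unfold to_left, within. destruct tm as [r| |]; simpl in *.
  - assert (Hd : 0 < r - T) by lra. exists (mkposreal _ Hd). intros y Hy _ Hyr.
    apply H; simpl; auto. change (Rabs (y - r) < r - T) in Hy. apply Rabs_def2 in Hy. lra.
  - exists T. intros y Hy _. apply H; simpl; auto. lra.
  - contradiction.
Qed.

Lemma ex_RInt_cont (g : R -> R) (a t : R) :
  (forall s, Rmin a t <= s <= Rmax a t -> continuous g s) -> ex_RInt g a t.
Proof. intros H. apply (ex_RInt_continuous (V:=R_CompleteNormedModule)). exact H. Qed.

Lemma RInt_minusR (f g : R -> R) a b : ex_RInt f a b -> ex_RInt g a b ->
  RInt (fun x => f x - g x) a b = RInt f a b - RInt g a b.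
Proof. intros. exact (RInt_minus f g a b H H0). Qed.

Lemma RInt_abs_bound (g : R -> R) (a t B : R) :
  (forall s, Rmin a t <= s <= Rmax a t -> continuous g s) ->
  (forall s, Rmin a t <= s <= Rmax a t -> Rabs (g s) <= B) ->
  Rabs (RInt g a t) <= Rabs (t - a) * B.
Proof.
  intros Hc Hb. assert (He := ex_RInt_cont g a t Hc).
  destruct (Rle_or_lt a t) as [h|h].
  - rewrite (Rabs_right (t - a)) by lra. apply abs_RInt_le_const; auto.
    intros s Hs. apply Hb. rewrite Rmin_left, Rmax_right by lra; lra.
  - rewrite <- (opp_RInt_swap g t a) by (apply ex_RInt_swap; exact He).
    change (Rabs (- RInt g t a) <= Rabs (t - a) * B). rewrite Rabs_Ropp.
    rewrite (Rabs_left (t - a)) by lra. replace (- (t - a)) with (a - t) by ring.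
    apply abs_RInt_le_const; [lra | apply ex_RInt_swap; auto |].
    intros s Hs. apply Hb. rewrite Rmin_right, Rmax_left by lra; lra.
Qed.

Lemma RInt_is_derive (g : R -> R) (a t d : R) : Rabs (t - a) < d ->
  (forall x, Rabs (x - a) < d -> continuous g x) ->
  is_derive (fun t => RInt g a t) t (g t).
Proof.
  intros Ht Hc. apply (is_derive_RInt _ _ a); [| apply Hc; auto].
  apply locally_eps. exists (d - Rabs (t - a)). split; [lra |]. intros y Hy.
  apply RInt_correct, ex_RInt_cont. intros s [Hs1 Hs2]. apply Hc.
  apply Rabs_def2 in Hy. revert Hs1 Hs2. unfold Rmin, Rmax.
  destruct (Rle_dec a y); intros; apply Rabs_def1; split_Rabs; lra.
Qed.

Lemma RInt_chasles_minus (g : R -> R) (a x s : R) : (forall z, continuous g z) ->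
  RInt g a s - RInt g a x = RInt g x s.
Proof.
  intros Hc. rewrite <- (RInt_Chasles g a x s); [| apply ex_RInt_cont; auto ..].
  change (RInt g a x + RInt g x s - RInt g a x = RInt g x s). ring.
Qed.

Lemma RInt_of_derive (u u' : R -> R) (x y : R) : x <= y ->
  (forall z, x <= z <= y -> is_derive u z (u' z)) -> (forall z, x <= z <= y -> continuous u' z) ->
  u y = u x + RInt u' x y.
Proof.
  intros Hxy Hd Hc.
  assert (H : is_RInt u' x y (minus (u y) (u x))).
  { apply (is_RInt_derive (V:=R_CompleteNormedModule));
      intros z Hz; rewrite Rmin_left, Rmax_right in Hz by lra; [apply Hd | apply Hc]; lra. }
  rewrite (is_RInt_unique (V:=R_CompleteNormedModule) _ _ _ _ H). change (u y = u x + (u y - u x)). ring.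
Qed.

Lemma between_close (tau t s : R) : Rmin tau t <= s <= Rmax tau t ->
  Rabs (s - tau) <= Rabs (t - tau).
Proof. unfold Rmin, Rmax. destruct (Rle_dec tau t); intros; split_Rabs; lra. Qed.

Lemma between_ball (tau x s z d : R) : Rmin x s <= z <= Rmax x s -> Rabs (x - tau) <= d ->
  Rabs (s - tau) <= d -> Rabs (z - tau) <= d.
Proof. unfold Rmin, Rmax. destruct (Rle_dec x s); intros; split_Rabs; lra. Qed.

Lemma le_of_forall_eps (x y : R) : (forall e, 0 < e -> x < y + e) -> x <= y.
Proof.
  intros H. destruct (Rle_or_lt x y) as [h|h]; auto. specialize (H ((x - y)/2)). lra.
Qed.

Lemma half_pow_small (C e : R) : 0 < e ->
  exists N, forall n, (n >= N)%nat -> C * (/2) ^ n < e.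
Proof.
  intros He. destruct (Rle_or_lt C 0) as [hC|hC].
  - exists 0%nat. intros n _. assert (0 < (/2)^n) by (apply pow_lt; lra). nra.
  - assert (Hy : 0 < e / C) by (apply Rdiv_lt_0_compat; lra).
    destruct (pow_lt_1_zero (/2) ltac:(rewrite Rabs_right; lra) (e / C) Hy) as [N HN].
    exists N. intros n Hn. specialize (HN n Hn).
    assert (0 < (/2)^n) by (apply pow_lt; lra). rewrite Rabs_right in HN by lra.
    apply Rlt_le_trans with (C * (e / C)); [apply Rmult_lt_compat_l; lra | right; field; lra].
Qed.

Lemma le_of_half_pow (z w C : R) : (forall n, z <= w + C * (/2) ^ n) -> z <= w.
Proof.
  intros H. apply le_of_forall_eps. intros e He. destruct (half_pow_small C e He) as [N HN].
  specialize (H N). specialize (HN N (le_n N)). lra.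
Qed.

Lemma eq_of_half_pow (x y C : R) : (forall n, Rabs (x - y) <= C * (/2) ^ n) -> x = y.
Proof.
  intros H. apply Rminus_diag_uniq, Rabs_eq_0, Rle_antisym; [| apply Rabs_pos].
  apply le_of_half_pow with C. intros n. specialize (H n). lra.
Qed.

Lemma geometric_cauchy_limit (u : nat -> R) (C : R) :
  (forall n k, Rabs (u (n + k)%nat - u n) <= C * (/2) ^ n) ->
  forall n, Rabs (Lim_seq u - u n) <= C * (/2) ^ n.
Proof.
  intros H.
  assert (Hex : ex_finite_lim_seq u).
  { apply ex_lim_seq_cauchy_corr. intros e.
    destruct (half_pow_small C e (cond_pos e)) as [N HN]. exists N. intros n m Hn Hm.
    destruct (Nat.le_ge_cases n m) as [h|h].
    - replace m with (n + (m - n))%nat by lia. rewrite Rabs_minus_sym.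
      eapply Rle_lt_trans; [apply H | apply HN; lia].
    - replace n with (m + (n - m))%nat by lia.
      eapply Rle_lt_trans; [apply H | apply HN; lia]. }
  intros n. assert (Hl := Lim_seq_correct' u Hex). apply is_lim_seq_spec in Hl.
  apply le_of_forall_eps. intros e He. destruct (Hl (mkposreal e He)) as [N HN].
  specialize (HN (n + N)%nat ltac:(lia)). simpl in HN. specialize (H n N).
  replace (Lim_seq u - u n) with ((Lim_seq u - u (n + N)%nat) + (u (n + N)%nat - u n)) by ring.
  eapply Rle_lt_trans; [apply Rabs_triang | rewrite Rabs_minus_sym; lra].
Qed.

Lemma lipschitz_continuous (g : R -> R) (K tau d t : R) : 0 <= K -> Rabs (t - tau) < d ->
  (forall s x, Rabs (s - tau) <= d -> Rabs (x - tau) <= d -> Rabs (g s - g x) <= K * Rabs (s - x)) ->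
  continuous g t.
Proof.
  intros HK Ht Hg. apply filterlim_locally. intros e. apply locally_eps.
  assert (He : 0 < e) by apply cond_pos.
  exists (Rmin (d - Rabs (t - tau)) (e / (K + 1))).
  split; [apply Rmin_glb_lt; [lra | apply Rdiv_lt_0_compat; lra] |].
  intros y Hy. change (Rabs (g y - g t) < e).
  assert (Rmin (d - Rabs (t - tau)) (e / (K + 1)) <= d - Rabs (t - tau)) by apply Rmin_l.
  assert (Rmin (d - Rabs (t - tau)) (e / (K + 1)) <= e / (K + 1)) by apply Rmin_r.
  assert (Hyt : Rabs (y - tau) <= d).
  { replace (y - tau) with ((y - t) + (t - tau)) by ring.
    eapply Rle_trans; [apply Rabs_triang | lra]. }
  eapply Rle_lt_trans; [apply Hg; auto; lra |].
  assert (K * Rabs (y - t) <= K * (e / (K + 1))) by (apply Rmult_le_compat_l; lra).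
  assert (K * (e / (K + 1)) = e - e / (K + 1)) by (field; lra).
  assert (0 < e / (K + 1)) by (apply Rdiv_lt_0_compat; lra). lra.
Qed.

Lemma is_derive_const_plus (g : R -> R) (c t l : R) :
  is_derive g t l -> is_derive (fun s => c + g s) t l.
Proof.
  intros H. apply is_derive_Reals in H. apply is_derive_Reals.
  intros e He. destruct (H e He) as [d Hd]. exists d. intros h Hh0 Hh.
  replace ((c + g (t + h) - (c + g t)) / h - l) with ((g (t + h) - g t) / h - l) by (field; auto).
  apply Hd; auto.
Qed.

(** [auto_derive] leaves derivatives of unknown functions in eta-expanded form. *)
Lemma Derive_of_is_derive (u : R -> R) t l : is_derive u t l -> Derive (fun x => u x) t = l.
Proof. apply is_derive_unique. Qed.

Lemma Rabs_sub_pivot (x y z : R) : Rabs (x - z) <= Rabs (x - y) + Rabs (y - z).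
Proof. replace (x - z) with ((x - y) + (y - z)) by ring. apply Rabs_triang. Qed.

(** Picard iteration for the system x' = y, y' = F(t, x, y), with F bounded by
    [MF] and [Lp]-Lipschitz in (x, y): on the interval |t - tau| < d, where
    d (1 + Lp) <= 1/2, the iterates converge to a C^1 solution. *)
Section Picard.

Variable F : R -> R -> R -> R.
Variables MF Lp tau x0 y0 d : R.
Hypothesis F_cont : forall g1 g2 t, continuous g1 t -> continuous g2 t ->
  continuous (fun s => F s (g1 s) (g2 s)) t.
Hypothesis F_bound : forall t x y, Rabs (F t x y) <= MF.
Hypothesis F_lip : forall t x y x' y',
  Rabs (F t x y - F t x' y') <= Lp * (Rabs (x - x') + Rabs (y - y')).
Hypothesis d_le_1 : d <= 1.
Hypothesis Lp_nonneg : 0 <= Lp.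
Hypothesis d_contract : d * (1 + Lp) <= /2.

Fixpoint picard_iter (n : nat) : (R -> R) * (R -> R) :=
  match n with
  | O => (fun _ => x0, fun _ => y0)
  | S n => (fun t => x0 + RInt (snd (picard_iter n)) tau t,
            fun t => y0 + RInt (fun s => F s (fst (picard_iter n) s) (snd (picard_iter n) s)) tau t)
  end.

Definition pic_x (n : nat) : R -> R := fst (picard_iter n).
Definition pic_y (n : nat) : R -> R := snd (picard_iter n).

Let C0 := Rabs y0 + MF.

Lemma MF_nonneg : 0 <= MF.
Proof. eapply Rle_trans; [apply Rabs_pos | apply (F_bound 0 0 0)]. Qed.

Lemma C0_nonneg : 0 <= C0.
Proof. unfold C0. generalize (Rabs_pos y0) MF_nonneg. lra. Qed.

Lemma pic_continuous n t : continuous (pic_x n) t /\ continuous (pic_y n) t.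
Proof.
  revert t. induction n as [|n IH]; intros t; unfold pic_x, pic_y; simpl.
  - split; apply cR_const.
  - split; apply cR_plus; try apply cR_const; eapply is_derive_continuous;
      apply (RInt_is_derive _ _ _ (Rabs (t - tau) + 1)); try lra; intros x _;
      [apply IH | apply F_cont; apply IH].
Qed.

Lemma pic_x_continuous n t : continuous (pic_x n) t.
Proof. apply (proj1 (pic_continuous n t)). Qed.

Lemma pic_y_continuous n t : continuous (pic_y n) t.
Proof. apply (proj2 (pic_continuous n t)). Qed.

Lemma pic_F_continuous n t : continuous (fun s => F s (pic_x n s) (pic_y n s)) t.
Proof. apply (F_cont (pic_x n) (pic_y n) t); [apply pic_x_continuous | apply pic_y_continuous]. Qed.

Lemma pic_step n t : Rabs (t - tau) <= d ->
  Rabs (pic_x (S n) t - pic_x n t) + Rabs (pic_y (S n) t - pic_y n t) <= C0 * (/2) ^ n.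
Proof.
  assert (HM := MF_nonneg). assert (HC := C0_nonneg). revert t.
  induction n as [|n IH]; intros t Ht.
  - unfold pic_x, pic_y; simpl.
    assert (E : RInt (fun _ => y0) tau t = (t - tau) * y0) by (rewrite RInt_const; reflexivity).
    rewrite E. replace (x0 + (t - tau) * y0 - x0) with ((t - tau) * y0) by ring.
    rewrite Rplus_minus_l.
    rewrite Rabs_mult.
    assert (Rabs (RInt (fun s => F s x0 y0) tau t) <= Rabs (t - tau) * MF).
    { apply RInt_abs_bound; intros; [apply F_cont; apply cR_const | apply F_bound]. }
    assert (Rabs (t - tau) * Rabs y0 <= Rabs y0) by (generalize (Rabs_pos y0); nra).
    assert (Rabs (t - tau) * MF <= MF) by nra. unfold C0. lra.
  - assert (Ex : pic_x (S (S n)) t - pic_x (S n) t = RInt (fun s => pic_y (S n) s - pic_y n s) tau t).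
    { rewrite (RInt_minusR (pic_y (S n)) (pic_y n)) by (apply ex_RInt_cont; intros; apply pic_y_continuous).
      unfold pic_x, pic_y. simpl. apply Rminus_plus_l_l. }
    assert (Ey : pic_y (S (S n)) t - pic_y (S n) t =
      RInt (fun s => F s (pic_x (S n) s) (pic_y (S n) s) - F s (pic_x n s) (pic_y n s)) tau t).
    { rewrite RInt_minusR by (apply ex_RInt_cont; intros; apply pic_F_continuous).
      unfold pic_x, pic_y. simpl. apply Rminus_plus_l_l. }
    rewrite Ex, Ey. set (B := C0 * (/2) ^ n).
    assert (Hseg : forall s, Rmin tau t <= s <= Rmax tau t -> Rabs (s - tau) <= d)
      by (intros s Hs; generalize (between_close tau t s Hs); lra).
    assert (H1 : Rabs (RInt (fun s => pic_y (S n) s - pic_y n s) tau t) <= Rabs (t - tau) * B).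
    { apply RInt_abs_bound; intros s Hs; [apply cR_minus; apply pic_y_continuous |].
      specialize (IH s (Hseg s Hs)). generalize (Rabs_pos (pic_x (S n) s - pic_x n s)). unfold B. lra. }
    assert (H2 : Rabs (RInt (fun s => F s (pic_x (S n) s) (pic_y (S n) s) - F s (pic_x n s) (pic_y n s)) tau t)
                 <= Rabs (t - tau) * (Lp * B)).
    { apply RInt_abs_bound; intros s Hs; [apply cR_minus; apply pic_F_continuous |].
      eapply Rle_trans; [apply F_lip | apply Rmult_le_compat_l; auto; apply IH, Hseg, Hs]. }
    assert (HB0 : 0 <= B) by (unfold B; apply Rmult_le_pos; [lra | apply pow_le; lra]).
    assert (Rabs (t - tau) * ((1 + Lp) * B) <= d * ((1 + Lp) * B))
      by (apply Rmult_le_compat_r; [apply Rmult_le_pos |]; lra).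
    assert (d * (1 + Lp) * B <= /2 * B) by (apply Rmult_le_compat_r; auto).
    simpl. replace (C0 * (/ 2 * (/ 2) ^ n)) with (/2 * B) by (unfold B; ring). nra.
Qed.

Lemma pic_cauchy n k t : Rabs (t - tau) <= d ->
  Rabs (pic_x (n + k) t - pic_x n t) + Rabs (pic_y (n + k) t - pic_y n t)
  <= 2 * C0 * ((/2) ^ n - (/2) ^ (n + k)).
Proof.
  intros Ht. induction k as [|k IH].
  - rewrite Nat.add_0_r, !Rminus_diag, !Rabs_R0. lra.
  - assert (H := pic_step (n + k) t Ht). rewrite <- Nat.add_succ_r in H.
    generalize (Rabs_sub_pivot (pic_x (n + S k) t) (pic_x (n + k) t) (pic_x n t))
               (Rabs_sub_pivot (pic_y (n + S k) t) (pic_y (n + k) t) (pic_y n t)).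
    assert (Hp : (/2)^(n + S k) = /2 * (/2)^(n+k)) by (rewrite Nat.add_succ_r; reflexivity).
    rewrite Hp. lra.
Qed.

Definition pic_lim_x (t : R) : R := real (Lim_seq (fun n => pic_x n t)).
Definition pic_lim_y (t : R) : R := real (Lim_seq (fun n => pic_y n t)).

Lemma pic_lim_rate t n : Rabs (t - tau) <= d ->
  Rabs (pic_lim_x t - pic_x n t) <= 2 * C0 * (/2) ^ n /\
  Rabs (pic_lim_y t - pic_y n t) <= 2 * C0 * (/2) ^ n.
Proof.
  intros Ht. assert (HC := C0_nonneg).
  assert (Hk : forall n k, 0 <= 2 * C0 * (/2) ^ (n + k))
    by (intros; apply Rmult_le_pos; [lra | apply pow_le; lra]).
  assert (Hxy : forall n k,
    Rabs (pic_x (n + k) t - pic_x n t) <= 2 * C0 * (/2) ^ n /\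
    Rabs (pic_y (n + k) t - pic_y n t) <= 2 * C0 * (/2) ^ n).
  { intros m k. specialize (Hk m k). generalize (pic_cauchy m k t Ht)
      (Rabs_pos (pic_x (m + k) t - pic_x m t)) (Rabs_pos (pic_y (m + k) t - pic_y m t)). lra. }
  unfold pic_lim_x, pic_lim_y. split;
    [apply (geometric_cauchy_limit (fun m => pic_x m t)) | apply (geometric_cauchy_limit (fun m => pic_y m t))];
    intros; apply Hxy.
Qed.

Lemma pic_bounds n t : Rabs (t - tau) <= d ->
  Rabs (pic_y n t - y0) <= Rabs (t - tau) * MF /\
  Rabs (pic_x n t - x0) <= Rabs (t - tau) * C0.
Proof.
  intros Ht. assert (HM := MF_nonneg). assert (HC := C0_nonneg).
  assert (Ha := Rabs_pos (t - tau)). destruct n as [|n].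
  - unfold pic_x, pic_y; simpl. rewrite !Rminus_diag, !Rabs_R0. split; apply Rmult_le_pos; lra.
  - unfold pic_x, pic_y; simpl. rewrite !Rplus_minus_l. fold (pic_x n) (pic_y n).
    split; apply RInt_abs_bound; intros s Hs; try apply pic_F_continuous; try apply F_bound;
      try apply pic_y_continuous.
    assert (Hs' := between_close tau t s Hs).
    change (Rabs (pic_y n s) <= C0). destruct n as [|n]; [unfold pic_y; simpl; unfold C0; lra |].
    assert (Rabs (RInt (fun z => F z (pic_x n z) (pic_y n z)) tau s) <= Rabs (s - tau) * MF).
    { apply RInt_abs_bound; intros; [apply pic_F_continuous | apply F_bound]. }
    unfold pic_y; simpl. fold (pic_x n) (pic_y n).
    eapply Rle_trans; [apply Rabs_triang |]. unfold C0. nra.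
Qed.

Lemma pic_lipschitz n s x : Rabs (s - tau) <= d -> Rabs (x - tau) <= d ->
  Rabs (pic_x n s - pic_x n x) <= C0 * Rabs (s - x) /\
  Rabs (pic_y n s - pic_y n x) <= MF * Rabs (s - x).
Proof.
  intros Hs Hx. assert (HM := MF_nonneg). assert (HC := C0_nonneg).
  assert (Ha := Rabs_pos (s - x)). destruct n as [|n].
  - unfold pic_x, pic_y; simpl. rewrite !Rminus_diag, !Rabs_R0. split; apply Rmult_le_pos; lra.
  - unfold pic_x, pic_y; simpl. rewrite !Rminus_plus_l_l. fold (pic_x n) (pic_y n).
    rewrite !RInt_chasles_minus; [| intros; apply pic_F_continuous | intros; apply pic_y_continuous].
    rewrite !(Rmult_comm _ (Rabs (s - x))).
    split; apply RInt_abs_bound; intros z Hz; try apply pic_F_continuous; try apply F_bound;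
      try apply pic_y_continuous.
    destruct (pic_bounds n z (between_ball tau x s z d Hz Hx Hs)) as [H1 _].
    change (Rabs (pic_y n z) <= C0).
    replace (pic_y n z) with ((pic_y n z - y0) + y0) by ring.
    eapply Rle_trans; [apply Rabs_triang |]. assert (Rabs (z - tau) <= d) by
      (apply (between_ball tau x s z d Hz Hx Hs)). unfold C0. nra.
Qed.

Lemma pic_lim_lipschitz s x : Rabs (s - tau) <= d -> Rabs (x - tau) <= d ->
  Rabs (pic_lim_x s - pic_lim_x x) <= C0 * Rabs (s - x) /\
  Rabs (pic_lim_y s - pic_lim_y x) <= MF * Rabs (s - x).
Proof.
  intros Hs Hx. split; apply (le_of_half_pow _ _ (4 * C0)); intros n;
    destruct (pic_lim_rate s n Hs) as [A1 B1]; destruct (pic_lim_rate x n Hx) as [A2 B2];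
    destruct (pic_lipschitz n s x Hs Hx) as [A3 B3].
  - generalize (Rabs_sub_pivot (pic_lim_x s) (pic_x n s) (pic_lim_x x))
      (Rabs_sub_pivot (pic_x n s) (pic_x n x) (pic_lim_x x)).
    rewrite (Rabs_minus_sym (pic_x n x)). lra.
  - generalize (Rabs_sub_pivot (pic_lim_y s) (pic_y n s) (pic_lim_y x))
      (Rabs_sub_pivot (pic_y n s) (pic_y n x) (pic_lim_y x)).
    rewrite (Rabs_minus_sym (pic_y n x)). lra.
Qed.

Lemma pic_lim_x_continuous t : Rabs (t - tau) < d -> continuous pic_lim_x t.
Proof.
  intros Ht. apply (lipschitz_continuous _ C0 tau d t C0_nonneg Ht).
  intros; apply pic_lim_lipschitz; auto.
Qed.

Lemma pic_lim_y_continuous t : Rabs (t - tau) < d -> continuous pic_lim_y t.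
Proof.
  intros Ht. apply (lipschitz_continuous _ MF tau d t MF_nonneg Ht).
  intros; apply pic_lim_lipschitz; auto.
Qed.

Lemma pic_lim_F_continuous t : Rabs (t - tau) < d ->
  continuous (fun s => F s (pic_lim_x s) (pic_lim_y s)) t.
Proof. intros Ht. apply (F_cont pic_lim_x pic_lim_y t); [apply pic_lim_x_continuous | apply pic_lim_y_continuous]; auto. Qed.

Lemma pic_lim_integral_x t : Rabs (t - tau) < d -> pic_lim_x t = x0 + RInt pic_lim_y tau t.
Proof.
  intros Ht. assert (HC := C0_nonneg). apply (eq_of_half_pow _ _ (4 * C0)). intros n.
  destruct (pic_lim_rate t (S n) (Rlt_le _ _ Ht)) as [A1 _].
  change (pic_x (S n) t) with (x0 + RInt (pic_y n) tau t) in A1.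
  assert (A2 : Rabs (RInt (fun s => pic_y n s - pic_lim_y s) tau t) <= Rabs (t - tau) * (2 * C0 * (/2)^n)).
  { apply RInt_abs_bound; intros z Hz; assert (Hz' := between_close tau t z Hz).
    - apply cR_minus; [apply pic_y_continuous | apply pic_lim_y_continuous; lra].
    - rewrite Rabs_minus_sym. apply pic_lim_rate. lra. }
  rewrite (RInt_minusR (pic_y n) pic_lim_y) in A2; [| apply ex_RInt_cont; intros z Hz ..];
    [| apply pic_y_continuous | apply pic_lim_y_continuous; generalize (between_close tau t z Hz); lra].
  assert (0 <= (/2)^n) by (apply pow_le; lra).
  assert (Rabs (t - tau) * (2 * C0 * (/2)^n) <= 2 * C0 * (/2)^n) by
    (rewrite <- (Rmult_1_l (2 * C0 * _)) at 2; apply Rmult_le_compat_r; [apply Rmult_le_pos |]; lra).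
  generalize (Rabs_sub_pivot (pic_lim_x t) (x0 + RInt (pic_y n) tau t) (x0 + RInt pic_lim_y tau t)).
  assert (0 <= C0 * (/2)^n) by (apply Rmult_le_pos; lra).
  rewrite Rminus_plus_l_l. simpl pow in A1. lra.
Qed.

Lemma pic_lim_integral_y t : Rabs (t - tau) < d ->
  pic_lim_y t = y0 + RInt (fun s => F s (pic_lim_x s) (pic_lim_y s)) tau t.
Proof.
  intros Ht. assert (HC := C0_nonneg).
  apply (eq_of_half_pow _ _ (2 * C0 + Lp * (4 * C0))). intros n.
  destruct (pic_lim_rate t (S n) (Rlt_le _ _ Ht)) as [_ A1].
  change (pic_y (S n) t) with (y0 + RInt (fun s => F s (pic_x n s) (pic_y n s)) tau t) in A1.
  assert (A2 : Rabs (RInt (fun s => F s (pic_x n s) (pic_y n s) - F s (pic_lim_x s) (pic_lim_y s)) tau t)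
               <= Rabs (t - tau) * (Lp * (4 * C0 * (/2)^n))).
  { apply RInt_abs_bound; intros z Hz; assert (Hz' := between_close tau t z Hz).
    - apply cR_minus; [apply pic_F_continuous | apply pic_lim_F_continuous; lra].
    - destruct (pic_lim_rate z n ltac:(lra)) as [B1 B2].
      eapply Rle_trans; [apply F_lip | apply Rmult_le_compat_l; auto].
      rewrite (Rabs_minus_sym (pic_x n z)), (Rabs_minus_sym (pic_y n z)). lra. }
  rewrite (RInt_minusR (fun s => F s (pic_x n s) (pic_y n s)) (fun s => F s (pic_lim_x s) (pic_lim_y s))) in A2;
    [| apply ex_RInt_cont; intros z Hz ..];
    [| apply pic_F_continuous | apply pic_lim_F_continuous; generalize (between_close tau t z Hz); lra].
  assert (0 <= (/2)^n) by (apply pow_le; lra).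
  assert (Rabs (t - tau) * (Lp * (4 * C0 * (/2)^n)) <= Lp * (4 * C0) * (/2)^n).
  { replace (Lp * (4 * C0) * (/2)^n) with (1 * (Lp * (4 * C0 * (/2)^n))) by ring.
    apply Rmult_le_compat_r; [repeat apply Rmult_le_pos |]; lra. }
  generalize (Rabs_sub_pivot (pic_lim_y t) (y0 + RInt (fun s => F s (pic_x n s) (pic_y n s)) tau t)
    (y0 + RInt (fun s => F s (pic_lim_x s) (pic_lim_y s)) tau t)).
  assert (0 <= C0 * (/2)^n) by (apply Rmult_le_pos; lra).
  rewrite Rminus_plus_l_l. simpl pow in A1. lra.
Qed.

Lemma pic_lim_derive t : Rabs (t - tau) < d ->
  is_derive pic_lim_x t (pic_lim_y t) /\
  is_derive pic_lim_y t (F t (pic_lim_x t) (pic_lim_y t)).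
Proof.
  intros Ht.
  assert (Hloc : forall w g : R -> R, (forall s, Rabs (s - tau) < d -> g s = w s) ->
                   locally t (fun s => w s = g s)).
  { intros w g Hgw. apply locally_eps. exists (d - Rabs (t - tau)). split; [lra |].
    intros y Hy. symmetry. apply Hgw.
    replace (y - tau) with ((y - t) + (t - tau)) by ring.
    eapply Rle_lt_trans; [apply Rabs_triang | lra]. }
  split.
  - apply (is_derive_ext_loc (fun s => x0 + RInt pic_lim_y tau s));
      [apply Hloc, pic_lim_integral_x |].
    apply is_derive_const_plus, (RInt_is_derive _ _ _ d Ht).
    intros; apply pic_lim_y_continuous; auto.
  - apply (is_derive_ext_loc (fun s => y0 + RInt (fun s => F s (pic_lim_x s) (pic_lim_y s)) tau s));
      [apply Hloc, pic_lim_integral_y |].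
    apply is_derive_const_plus.
    apply (RInt_is_derive (fun s => F s (pic_lim_x s) (pic_lim_y s)) _ _ d Ht).
    intros; apply pic_lim_F_continuous; auto.
Qed.

Lemma pic_lim_close t : Rabs (t - tau) < d ->
  Rabs (pic_lim_x t - x0) <= Rabs (t - tau) * C0 /\
  Rabs (pic_lim_y t - y0) <= Rabs (t - tau) * MF.
Proof.
  intros Ht. split; apply (le_of_half_pow _ _ (2 * C0)); intros n;
    destruct (pic_lim_rate t n (Rlt_le _ _ Ht)) as [A1 B1];
    destruct (pic_bounds n t (Rlt_le _ _ Ht)) as [B2 A2].
  - generalize (Rabs_sub_pivot (pic_lim_x t) (pic_x n t) x0). lra.
  - generalize (Rabs_sub_pivot (pic_lim_y t) (pic_y n t) y0). lra.
Qed.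

Lemma pic_lim_in_box r0 t : d * (Rabs y0 + MF) <= r0 -> Rabs (t - tau) < d ->
  Rabs (pic_lim_x t - x0) <= r0 /\ Rabs (pic_lim_y t - y0) <= r0.
Proof.
  intros Hr0 Ht. destruct (pic_lim_close t Ht) as [B1 B2].
  assert (HM := MF_nonneg). assert (Hy := Rabs_pos y0). assert (Ha := Rabs_pos (t - tau)).
  assert (Rabs (t - tau) * (Rabs y0 + MF) <= d * (Rabs y0 + MF)) by (apply Rmult_le_compat_r; lra).
  assert (Rabs (t - tau) * MF <= d * (Rabs y0 + MF)) by (apply Rmult_le_compat; lra).
  unfold C0 in B1. lra.
Qed.

End Picard.

(** Uniqueness for the integral form of x' = y, y' = F(t, x, y) on an interval
    [[tau, r)] of length at most [d], d (1 + Lp) <= 1/2: each integration halves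
    the distance between two solutions. *)
Section IntegralUniqueness.

Variable F : R -> R -> R -> R.
Variables Lp d tau r x0 y0 B : R.
Variables u u' v v' : R -> R.
Hypothesis F_lip : forall t x y x' y',
  Rabs (F t x y - F t x' y') <= Lp * (Rabs (x - x') + Rabs (y - y')).
Hypothesis Lp_nonneg : 0 <= Lp.
Hypothesis d_contract : d * (1 + Lp) <= /2.
Hypothesis short : r - tau <= d.
Hypothesis u'_cont : forall z, tau <= z < r -> continuous u' z.
Hypothesis v'_cont : forall z, tau <= z < r -> continuous v' z.
Hypothesis Fu_cont : forall z, tau <= z < r -> continuous (fun s => F s (u s) (u' s)) z.
Hypothesis Fv_cont : forall z, tau <= z < r -> continuous (fun s => F s (v s) (v' s)) z.
Hypothesis u_int : forall s, tau <= s < r ->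
  u s = x0 + RInt u' tau s /\ u' s = y0 + RInt (fun z => F z (u z) (u' z)) tau s.
Hypothesis v_int : forall s, tau <= s < r ->
  v s = x0 + RInt v' tau s /\ v' s = y0 + RInt (fun z => F z (v z) (v' z)) tau s.
Hypothesis dist_bound : forall s, tau <= s < r -> Rabs (u s - v s) + Rabs (u' s - v' s) <= B.

Lemma integral_system_halving n s : tau <= s < r ->
  Rabs (u s - v s) + Rabs (u' s - v' s) <= B * (/2) ^ n.
Proof.
  revert s. induction n as [|n IH]; intros s Hs; [rewrite pow_O, Rmult_1_r; auto |].
  assert (Hseg : forall z, Rmin tau s <= z <= Rmax tau s -> tau <= z < r)
    by (intros z Hz; rewrite Rmin_left, Rmax_right in Hz; lra).
  assert (Ex : u s - v s = RInt (fun z => u' z - v' z) tau s).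
  { rewrite (RInt_minusR u' v') by (apply ex_RInt_cont; intros z Hz; auto).
    rewrite (proj1 (u_int s Hs)), (proj1 (v_int s Hs)). apply Rminus_plus_l_l. }
  assert (Ey : u' s - v' s = RInt (fun z => F z (u z) (u' z) - F z (v z) (v' z)) tau s).
  { rewrite (RInt_minusR (fun z => F z (u z) (u' z)) (fun z => F z (v z) (v' z)))
      by (apply ex_RInt_cont; intros z Hz; auto).
    rewrite (proj2 (u_int s Hs)), (proj2 (v_int s Hs)). apply Rminus_plus_l_l. }
  set (E := B * (/2) ^ n).
  assert (HE : 0 <= E) by (specialize (IH s Hs); generalize (Rabs_pos (u s - v s))
    (Rabs_pos (u' s - v' s)); unfold E; lra).
  assert (A1 : Rabs (u s - v s) <= Rabs (s - tau) * E).
  { rewrite Ex. apply RInt_abs_bound; intros z Hz; [apply cR_minus; auto |].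
    specialize (IH z (Hseg z Hz)). generalize (Rabs_pos (u z - v z)). unfold E. lra. }
  assert (A2 : Rabs (u' s - v' s) <= Rabs (s - tau) * (Lp * E)).
  { rewrite Ey. apply RInt_abs_bound; intros z Hz; [apply cR_minus; auto |].
    eapply Rle_trans; [apply F_lip | apply Rmult_le_compat_l; auto; apply IH, Hseg, Hz]. }
  assert (Rabs (s - tau) * ((1 + Lp) * E) <= d * ((1 + Lp) * E))
    by (apply Rmult_le_compat_r; [apply Rmult_le_pos | rewrite Rabs_right]; lra).
  assert (d * (1 + Lp) * E <= /2 * E) by (apply Rmult_le_compat_r; auto).
  replace (B * (/2) ^ S n) with (/2 * E) by (unfold E; simpl; ring). nra.
Qed.

Lemma integral_system_unique s : tau <= s < r -> u s = v s /\ u' s = v' s.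
Proof.
  intros Hs. split; apply (eq_of_half_pow _ _ B); intros n;
    generalize (integral_system_halving n s Hs) (Rabs_pos (u s - v s)) (Rabs_pos (u' s - v' s)); lra.
Qed.

End IntegralUniqueness.

Definition glue (r : R) (u p : R -> R) (s : R) : R := if Rlt_dec s r then u s else p s.

Lemma within_transfer (I J : R -> Prop) (g1 g2 : R -> R) (t l d : R) : 0 < d ->
  (forall s, Rabs (s - t) < d -> I s -> J s /\ g2 s = g1 s) ->
  filterlim g1 (within J (locally t)) (locally l) ->
  filterlim g2 (within I (locally t)) (locally l).
Proof.
  intros Hd Hs H. apply filterlim_locally. intros e. apply within_eps.
  apply filterlim_locally with (eps := e) in H. apply within_eps in H.
  destruct H as [d1 [Hd1 H]]. exists (Rmin d d1). split; [apply Rmin_glb_lt; auto |].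
  intros y Hy HIy. assert (Rmin d d1 <= d) by apply Rmin_l. assert (Rmin d d1 <= d1) by apply Rmin_r.
  destruct (Hs y ltac:(lra) HIy) as [HJ He]. rewrite He. apply H; auto. lra.
Qed.

Section Glue.

Variables t0 tau r T1 : R.
Hypothesis order : t0 <= tau < r /\ r < T1.

Let glue_right (u p : R -> R) (t : R) : (forall s, tau < s < r -> u s = p s) -> r <= t < T1 ->
  forall s, Rabs (s - t) < Rmin (t - tau) (T1 - t) -> glue r u p s = p s.
Proof.
  intros Hup Ht s Hs. assert (Rmin (t - tau) (T1 - t) <= t - tau) by apply Rmin_l.
  apply Rabs_def2 in Hs. unfold glue. destruct (Rlt_dec s r); auto. apply Hup. lra.
Qed.

Let glue_radius (t : R) : r <= t < T1 -> 0 < Rmin (t - tau) (T1 - t).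
Proof. intros. apply Rmin_glb_lt; lra. Qed.

Lemma deriv_within_glue (u u' p p' : R -> R) :
  deriv_within (Ico t0 (Finite r)) u u' ->
  (forall t, tau < t < T1 -> is_derive p t (p' t)) ->
  (forall s, tau < s < r -> u s = p s /\ u' s = p' s) ->
  deriv_within (Ico t0 (Finite T1)) (glue r u p) (glue r u' p').
Proof.
  intros Hu Hp Hup t [Ht Htt]. simpl in Htt.
  destruct (Rlt_dec t r) as [ht|ht].
  - replace (glue r u' p' t) with (u' t) by (unfold glue; destruct (Rlt_dec t r); [auto | lra]).
    apply (within_transfer _ (fun s => Ico t0 (Finite r) s /\ s <> t)
             (fun s => (u s - u t) / (s - t)) _ t (u' t) (r - t)); [lra | | apply Hu; split; simpl; lra].
    intros s Hs [[HIs1 HIs2] Hne]. apply Rabs_def2 in Hs.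
    split; [repeat split; simpl; auto; lra |]. unfold glue. destruct (Rlt_dec s r); [| lra].
    destruct (Rlt_dec t r); [auto | lra].
  - replace (glue r u' p' t) with (p' t) by (unfold glue; destruct (Rlt_dec t r); [lra | auto]).
    assert (Hg := glue_right u p t (fun s Hs => proj1 (Hup s Hs)) ltac:(lra)).
    apply (within_transfer _ (fun s => s <> t) (fun s => (p s - p t) / (s - t)) _ t (p' t) _
             (glue_radius t ltac:(lra))).
    + intros s Hs [_ Hne]. split; auto. rewrite !Hg; auto. rewrite Rminus_diag, Rabs_R0.
      apply glue_radius; lra.
    + apply filterlim_locally. intros e. apply within_eps.
      assert (H := Hp t ltac:(lra)). apply is_derive_Reals in H.
      destruct (H e (cond_pos e)) as [d Hd]. exists d. split; [apply cond_pos |].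
      intros y Hy Hne. change (Rabs ((p y - p t) / (y - t) - p' t) < e).
      specialize (Hd (y - t)). replace (t + (y - t)) with y in Hd by ring. apply Hd; [lra | auto].
Qed.

Lemma cont_within_glue (u p : R -> R) :
  cont_within (Ico t0 (Finite r)) u ->
  (forall t, tau < t < T1 -> continuous p t) ->
  (forall s, tau < s < r -> u s = p s) ->
  cont_within (Ico t0 (Finite T1)) (glue r u p).
Proof.
  intros Hu Hp Hup t [Ht Htt]. simpl in Htt.
  destruct (Rlt_dec t r) as [ht|ht].
  - replace (glue r u p t) with (u t) by (unfold glue; destruct (Rlt_dec t r); [auto | lra]).
    apply (within_transfer _ (Ico t0 (Finite r)) u _ t (u t) (r - t)); [lra | | apply Hu; split; simpl; lra].
    intros s Hs [HIs1 HIs2]. apply Rabs_def2 in Hs.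
    split; [split; simpl; lra |]. unfold glue. destruct (Rlt_dec s r); [auto | lra].
  - replace (glue r u p t) with (p t) by (unfold glue; destruct (Rlt_dec t r); [lra | auto]).
    assert (Hg := glue_right u p t Hup ltac:(lra)).
    apply (within_transfer _ (fun _ => True) p _ t (p t) _ (glue_radius t ltac:(lra))).
    + intros s Hs _. split; auto.
    + apply filterlim_locally. intros e. apply within_eps.
      destruct (continuous_eps p t (Hp t ltac:(lra)) e (cond_pos e)) as [d [Hd H]].
      exists d. split; auto. intros y Hy _. apply H; auto.
Qed.

End Glue.

Lemma step_size (K Lp r0 gap : R) : 0 < K -> 0 <= Lp -> 0 < r0 -> 0 < gap ->
  exists d, 0 < d /\ d <= 1 /\ d * (1 + Lp) <= /2 /\ d * K <= r0 /\ d <= gap.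
Proof.
  intros HK HLp Hr0 Hgap. set (d := Rmin 1 (Rmin (/ (2 * (1 + Lp))) (Rmin (r0 / K) gap))).
  assert (H1 : d <= 1) by apply Rmin_l.
  assert (H2 : d <= / (2 * (1 + Lp))) by (eapply Rle_trans; [apply Rmin_r | apply Rmin_l]).
  assert (H3 : d <= r0 / K) by (eapply Rle_trans; [apply Rmin_r | eapply Rle_trans; [apply Rmin_r | apply Rmin_l]]).
  assert (H4 : d <= gap) by (eapply Rle_trans; [apply Rmin_r | eapply Rle_trans; [apply Rmin_r | apply Rmin_r]]).
  exists d. repeat split; auto.
  - repeat apply Rmin_glb_lt; try lra; [apply Rinv_0_lt_compat | apply Rdiv_lt_0_compat]; lra.
  - apply Rle_trans with (/ (2 * (1 + Lp)) * (1 + Lp)); [apply Rmult_le_compat_r; lra | right; field; lra].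
  - apply Rle_trans with (r0 / K * K); [apply Rmult_le_compat_r; lra | right; field; lra].
Qed.

Lemma abs_mul_le (u v A B : R) : Rabs u <= A -> Rabs v <= B -> Rabs (u * v) <= A * B.
Proof. intros. rewrite Rabs_mult. apply Rmult_le_compat; auto; apply Rabs_pos. Qed.

Lemma inv_le_1 (x : R) : 1 <= x -> 0 < / x <= 1.
Proof. intros. split; [apply Rinv_0_lt_compat; lra | rewrite <- Rinv_1; apply Rinv_le_contravar; lra]. Qed.

Definition clampR (lo hi x : R) := Rmax lo (Rmin hi x).

Lemma clamp_lip lo hi x y : Rabs (clampR lo hi x - clampR lo hi y) <= Rabs (x - y).
Proof. unfold clampR, Rmax, Rmin. repeat destruct Rle_dec; split_Rabs; lra. Qed.

Lemma clamp_range lo hi x : lo <= hi -> lo <= clampR lo hi x <= hi.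
Proof. intros. unfold clampR, Rmax, Rmin. repeat destruct Rle_dec; lra. Qed.

Lemma clamp_id lo hi x : lo <= x <= hi -> clampR lo hi x = x.
Proof. intros. unfold clampR, Rmax, Rmin. repeat destruct Rle_dec; lra. Qed.

Definition Fode (a b c t x y : R) :=
  - a / t * y + b / t ^ 2 * x * (1 + x) + c * y ^ 2 / (1 + x).

(** Its right-hand side modified outside the box [[xlo, xhi] x [ylo, yhi]] and
    for t < t0, so as to become bounded and globally Lipschitz. *)
Definition Fclamp (a b c t0 xlo xhi ylo yhi t x y : R) :=
  Fode a b c (Rmax t t0) (clampR xlo xhi x) (clampR ylo yhi y).

Lemma Fode_continuous a b c (h0 h1 h2 : R -> R) t :
  continuous h0 t -> continuous h1 t -> continuous h2 t -> h0 t <> 0 -> 1 + h1 t <> 0 ->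
  continuous (fun s => Fode a b c (h0 s) (h1 s) (h2 s)) t.
Proof.
  intros C0 C1 C2 N0 N1. unfold Fode.
  assert (C1' : continuous (fun s => 1 + h1 s) t) by (apply cR_plus; [apply cR_const | auto]).
  apply cR_plus; [apply cR_plus |].
  - apply cR_mult; auto. apply cR_div; auto. apply cR_const.
  - apply cR_mult; auto. apply cR_mult; auto. apply cR_div; [apply cR_const | apply cR_pow; auto |].
    apply pow_nonzero; auto.
  - apply cR_div; auto. apply cR_scal, cR_pow; auto.
Qed.

Definition ode_bound (a b c t0 X Y : R) := a * Y / t0 + b * X * (1 + X) / t0 ^ 2 + c * Y ^ 2.
Definition ode_lip (a b c t0 X Y : R) := a / t0 + b * (1 + 2 * X) / t0 ^ 2 + c * (2 * Y + Y ^ 2).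

Section FodeEstimates.

Variables a b c t0 : R.
Hypothesis a_nonneg : 0 <= a.
Hypothesis b_nonneg : 0 <= b.
Hypothesis c_nonneg : 0 <= c.
Hypothesis t0_pos : 0 < t0.

Lemma Fode_bound t x y X Y : t0 <= t -> 0 <= x <= X -> Rabs y <= Y ->
  Rabs (Fode a b c t x y) <= ode_bound a b c t0 X Y.
Proof.
  intros Ht Hx Hy. unfold Fode, ode_bound.
  assert (HY : 0 <= Y) by (eapply Rle_trans; [apply Rabs_pos | eauto]).
  assert (Ht2 : 0 < t0 ^ 2 <= t ^ 2) by (split; [apply pow_lt | apply pow_incr]; lra).
  assert (Hbt : 0 <= b / t ^ 2 <= b / t0 ^ 2) by (split; [apply Rdiv_le_0_compat |
    unfold Rdiv; apply Rmult_le_compat_l; [| apply Rinv_le_contravar]]; lra).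
  assert (H1 : Rabs (- a / t * y) <= a * Y / t0).
  { replace (- a / t * y) with (- (a / t) * y) by (field; lra).
    replace (a * Y / t0) with ((a / t0) * Y) by (field; lra).
    apply abs_mul_le; auto. rewrite Rabs_Ropp, Rabs_right by (apply Rle_ge, Rdiv_le_0_compat; lra).
    apply Rmult_le_compat_l; auto. apply Rinv_le_contravar; lra. }
  assert (H2 : Rabs (b / t ^ 2 * x * (1 + x)) <= b * X * (1 + X) / t0 ^ 2).
  { rewrite Rabs_right by (apply Rle_ge; apply Rmult_le_pos; [apply Rmult_le_pos |]; lra).
    replace (b * X * (1 + X) / t0 ^ 2) with (b / t0 ^ 2 * X * (1 + X)) by (field; lra).
    apply Rmult_le_compat; nra. }
  assert (H3 : Rabs (c * y ^ 2 / (1 + x)) <= c * Y ^ 2).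
  { assert (Hx1 := inv_le_1 (1 + x) ltac:(lra)).
    assert (y ^ 2 <= Y ^ 2) by (rewrite <- (pow2_abs y); apply pow_incr; split; auto; apply Rabs_pos).
    assert (0 <= c * y ^ 2) by (apply Rmult_le_pos; auto; apply pow2_ge_0).
    unfold Rdiv. rewrite Rabs_right by (apply Rle_ge; apply Rmult_le_pos; lra). nra. }
  eapply Rle_trans; [apply Rabs_triang |].
  eapply Rle_trans; [apply Rplus_le_compat_r, Rabs_triang | lra].
Qed.

Lemma ode_constants_nonneg X Y : 0 <= X -> 0 <= Y ->
  0 <= ode_bound a b c t0 X Y /\ 0 <= ode_lip a b c t0 X Y.
Proof.
  intros HX HY. unfold ode_bound, ode_lip.
  assert (0 < t0 ^ 2) by (apply pow_lt; lra).
  assert (0 <= a * Y / t0) by (apply Rdiv_le_0_compat; [apply Rmult_le_pos |]; lra).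
  assert (0 <= b * X * (1 + X) / t0 ^ 2) by (apply Rdiv_le_0_compat;
    [apply Rmult_le_pos; [apply Rmult_le_pos |] |]; lra).
  assert (0 <= c * Y ^ 2) by (apply Rmult_le_pos; [lra | apply pow2_ge_0]).
  assert (0 <= a / t0) by (apply Rdiv_le_0_compat; lra).
  assert (0 <= b * (1 + 2 * X) / t0 ^ 2) by (apply Rdiv_le_0_compat; [apply Rmult_le_pos |]; lra).
  assert (0 <= c * (2 * Y + Y ^ 2)) by (apply Rmult_le_pos; nra).
  lra.
Qed.

Lemma drag_lip t y y' : t0 <= t ->
  Rabs (- a / t * y - - a / t * y') <= a / t0 * Rabs (y - y').
Proof.
  intros Ht. replace (- a / t * y - - a / t * y') with (- (a / t) * (y - y')) by (field; lra).
  rewrite Rabs_mult, Rabs_Ropp, Rabs_right by (apply Rle_ge, Rdiv_le_0_compat; lra).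
  apply Rmult_le_compat_r; [apply Rabs_pos |]. unfold Rdiv. apply Rmult_le_compat_l; auto.
  apply Rinv_le_contravar; lra.
Qed.

Lemma growth_lip t x x' X : t0 <= t -> 0 <= x <= X -> 0 <= x' <= X ->
  Rabs (b / t ^ 2 * x * (1 + x) - b / t ^ 2 * x' * (1 + x')) <= b * (1 + 2 * X) / t0 ^ 2 * Rabs (x - x').
Proof.
  intros Ht Hx Hx'.
  assert (Ht2 : 0 < t0 ^ 2 <= t ^ 2) by (split; [apply pow_lt | apply pow_incr]; lra).
  assert (Hbt : 0 <= b / t ^ 2 <= b / t0 ^ 2) by (split; [apply Rdiv_le_0_compat |
    unfold Rdiv; apply Rmult_le_compat_l; [| apply Rinv_le_contravar]]; lra).
  replace (b / t ^ 2 * x * (1 + x) - b / t ^ 2 * x' * (1 + x'))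
    with ((b / t ^ 2) * ((x - x') * (1 + x + x'))) by ring.
  replace (b * (1 + 2 * X) / t0 ^ 2 * Rabs (x - x')) with (b / t0 ^ 2 * (Rabs (x - x') * (1 + 2 * X)))
    by (field; lra).
  apply abs_mul_le; [rewrite Rabs_right; lra |].
  apply abs_mul_le; [lra | rewrite Rabs_right; lra].
Qed.

Lemma quadratic_lip x x' y y' Y : 0 <= x -> 0 <= x' -> Rabs y <= Y -> Rabs y' <= Y ->
  Rabs (c * y ^ 2 / (1 + x) - c * y' ^ 2 / (1 + x'))
  <= c * (2 * Y) * Rabs (y - y') + c * Y ^ 2 * Rabs (x - x').
Proof.
  intros Hx Hx' Hy Hy'.
  replace (c * y ^ 2 / (1 + x) - c * y' ^ 2 / (1 + x'))
    with (c * ((y - y') * ((y + y') / (1 + x))) + c * (y' ^ 2 * ((x' - x) / ((1 + x) * (1 + x')))))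
    by (field; lra).
  eapply Rle_trans; [apply Rabs_triang | apply Rplus_le_compat].
  - replace (c * (2 * Y) * Rabs (y - y')) with (c * (Rabs (y - y') * (2 * Y))) by ring.
    apply abs_mul_le; [rewrite Rabs_right; lra |]. apply abs_mul_le; [lra |].
    assert (Hi := inv_le_1 (1 + x) ltac:(lra)).
    assert (Rabs (y + y') <= 2 * Y) by (eapply Rle_trans; [apply Rabs_triang | lra]).
    unfold Rdiv. rewrite Rabs_mult, (Rabs_right (/ (1 + x))) by lra.
    assert (0 <= Rabs (y + y')) by apply Rabs_pos. nra.
  - replace (c * Y ^ 2 * Rabs (x - x')) with (c * (Y ^ 2 * Rabs (x - x'))) by ring.
    apply abs_mul_le; [rewrite Rabs_right; lra |]. apply abs_mul_le.
    + rewrite Rabs_right by (apply Rle_ge, pow2_ge_0). rewrite <- (pow2_abs y').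
      apply pow_incr. split; auto. apply Rabs_pos.
    + assert (Hi := inv_le_1 ((1 + x) * (1 + x')) ltac:(nra)).
      unfold Rdiv. rewrite Rabs_mult, Rabs_minus_sym, (Rabs_right (/ ((1 + x) * (1 + x')))) by lra.
      assert (0 <= Rabs (x - x')) by apply Rabs_pos. nra.
Qed.

Lemma Fode_lip t x y x' y' X Y : t0 <= t ->
  0 <= x <= X -> 0 <= x' <= X -> Rabs y <= Y -> Rabs y' <= Y ->
  Rabs (Fode a b c t x y - Fode a b c t x' y') <= ode_lip a b c t0 X Y * (Rabs (x - x') + Rabs (y - y')).
Proof.
  intros Ht Hx Hx' Hy Hy'. unfold Fode, ode_lip.
  assert (HY : 0 <= Y) by (eapply Rle_trans; [apply Rabs_pos | eauto]).
  assert (Hdx := Rabs_pos (x - x')). assert (Hdy := Rabs_pos (y - y')).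
  assert (H1 := drag_lip t y y' Ht). assert (H2 := growth_lip t x x' X Ht Hx Hx').
  assert (H3 := quadratic_lip x x' y y' Y ltac:(lra) ltac:(lra) Hy Hy').
  assert (0 <= a / t0) by (apply Rdiv_le_0_compat; lra).
  assert (0 <= b * (1 + 2 * X) / t0 ^ 2) by (apply Rdiv_le_0_compat; [nra | apply pow_lt; lra]).
  assert (0 <= c * Y ^ 2) by (apply Rmult_le_pos; auto; apply pow2_ge_0).
  set (u := - a / t * y) in *. set (u' := - a / t * y') in *.
  set (v := b / t ^ 2 * x * (1 + x)) in *. set (v' := b / t ^ 2 * x' * (1 + x')) in *.
  set (w := c * y ^ 2 / (1 + x)) in *. set (w' := c * y' ^ 2 / (1 + x')) in *.
  replace (u + v + w - (u' + v' + w')) with ((u - u') + (v - v') + (w - w')) by ring.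
  eapply Rle_trans; [apply Rabs_triang |].
  eapply Rle_trans; [apply Rplus_le_compat_r, Rabs_triang |].
  assert (0 <= a / t0 * Rabs (x - x')) by (apply Rmult_le_pos; auto).
  assert (0 <= b * (1 + 2 * X) / t0 ^ 2 * Rabs (y - y')) by (apply Rmult_le_pos; auto).
  assert (0 <= c * (2 * Y) * Rabs (x - x')) by (apply Rmult_le_pos; nra).
  assert (0 <= c * Y ^ 2 * Rabs (y - y')) by (apply Rmult_le_pos; auto).
  nra.
Qed.

End FodeEstimates.

Section ClampedField.

Variables a b c t0 xlo xhi ylo yhi X Y : R.
Hypothesis a_nonneg : 0 <= a.
Hypothesis b_nonneg : 0 <= b.
Hypothesis c_nonneg : 0 <= c.
Hypothesis t0_pos : 0 < t0.
Hypothesis box_x : 0 <= xlo <= xhi /\ xhi <= X.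
Hypothesis box_y : ylo <= yhi /\ Rabs ylo <= Y /\ Rabs yhi <= Y.

Let clamp_x x : 0 <= clampR xlo xhi x <= X.
Proof. generalize (clamp_range xlo xhi x). lra. Qed.

Let clamp_y y : Rabs (clampR ylo yhi y) <= Y.
Proof. destruct (clamp_range ylo yhi y) as [H1 H2]; [lra |]. apply Rabs_le. split_Rabs; lra. Qed.

Lemma Fclamp_continuous (g1 g2 : R -> R) t : continuous g1 t -> continuous g2 t ->
  continuous (fun s => Fclamp a b c t0 xlo xhi ylo yhi s (g1 s) (g2 s)) t.
Proof.
  intros C1 C2. unfold Fclamp. apply Fode_continuous.
  - apply Rmax_continuous.
  - apply (continuous_comp g1 (clampR xlo xhi)); auto. apply lip1_continuous, clamp_lip.
  - apply (continuous_comp g2 (clampR ylo yhi)); auto. apply lip1_continuous, clamp_lip.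
  - generalize (Rmax_r t t0). lra.
  - generalize (clamp_x (g1 t)). lra.
Qed.

Lemma Fclamp_bound t x y :
  Rabs (Fclamp a b c t0 xlo xhi ylo yhi t x y) <= ode_bound a b c t0 X Y.
Proof. apply (Fode_bound a b c t0); [auto .. | apply Rmax_r | apply clamp_x | apply clamp_y]. Qed.

Lemma Fclamp_lip t x y x' y' :
  Rabs (Fclamp a b c t0 xlo xhi ylo yhi t x y - Fclamp a b c t0 xlo xhi ylo yhi t x' y') <=
  ode_lip a b c t0 X Y * (Rabs (x - x') + Rabs (y - y')).
Proof.
  eapply Rle_trans; [apply (Fode_lip a b c t0); [auto | auto | auto | auto | apply Rmax_r |
    apply clamp_x | apply clamp_x | apply clamp_y | apply clamp_y] |].
  apply Rmult_le_compat_l; [| apply Rplus_le_compat; apply clamp_lip].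
  apply (ode_constants_nonneg a b c t0); try lra.
  eapply Rle_trans; [apply Rabs_pos | apply box_y].
Qed.

Lemma Fclamp_in_box t x y : t0 <= t -> xlo <= x <= xhi -> ylo <= y <= yhi ->
  Fclamp a b c t0 xlo xhi ylo yhi t x y = Fode a b c t x y.
Proof. intros. unfold Fclamp. rewrite Rmax_left, !clamp_id by lra. reflexivity. Qed.

End ClampedField.

(** Algebraic core of the lower bound on [phi_rate]: with [P = V^2/F <= k2] and
    [F] large, [2b - 2(a-1)V/F - (3-2c)P - P/F >= d0]. *)
Lemma drift_lower_bound (a b c F V k2 d0 eps : R) :
  1 < a -> c < 3/2 -> 0 < d0 -> 0 < eps -> 0 < F -> 0 <= V ->
  2 * b - (3 - 2 * c) * k2 = 2 * d0 -> 2 * (a - 1) * eps = d0 / 2 ->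
  k2 / F <= d0 / 2 -> k2 / F <= eps ^ 2 -> V ^ 2 / F <= k2 ->
  d0 <= 2 * b - 2 * (a - 1) * V / F - (3 - 2 * c) * (V ^ 2 / F) - (V ^ 2 / F) / F.
Proof.
  intros Ha Hc Hd He HF HV E1 E2 H1 H2 HP.
  set (P := V ^ 2 / F) in *.
  assert (Hk2F : P / F <= k2 / F) by (unfold Rdiv; apply Rmult_le_compat_r;
    [left; apply Rinv_0_lt_compat |]; lra).
  assert (HVF : (V / F) ^ 2 <= eps ^ 2) by (replace ((V / F) ^ 2) with (P / F) by (unfold P; field; lra); lra).
  assert (HVF0 : 0 <= V / F) by (apply Rdiv_le_0_compat; lra).
  assert (HVe : V / F <= eps) by nra.
  assert (2 * (a - 1) * V / F = 2 * (a - 1) * (V / F)) by (field; lra).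
  assert ((3 - 2 * c) * P <= (3 - 2 * c) * k2) by (apply Rmult_le_compat_l; lra).
  assert (2 * (a - 1) * (V / F) <= 2 * (a - 1) * eps) by (apply Rmult_le_compat_l; lra).
  lra.
Qed.

Lemma Rbar_finite_or_infinite (x : Rbar) (t : R) : Rbar_lt t x -> (exists r, x = Finite r) \/ x = p_infty.
Proof. destruct x as [r| |]; simpl; [left; exists r | right | ]; auto. intros []. Qed.

Section Solution.

Variables a b c t0 beta beta0 : R.
Variable tm : Rbar.
Variables f f1 f2 : R -> R.

Hypothesis a_gt_1 : 1 < a.
Hypothesis b_pos : 0 < b.
Hypothesis c_gt_1 : 1 < c.
Hypothesis t0_pos : 0 < t0.
Hypothesis beta_pos : 0 < beta.
Hypothesis beta0_pos : 0 < beta0.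
Hypothesis tm_gt_t0 : Rbar_lt t0 tm.
Hypothesis f_deriv : deriv_within (Ico t0 tm) f f1.
Hypothesis f1_deriv : deriv_within (Ico t0 tm) f1 f2.
Hypothesis f2_cont : cont_within (Ico t0 tm) f2.
Hypothesis f_ode : forall t, Ico t0 tm t -> f2 t = Fode a b c t (f t) (f1 t).
Hypothesis f_init : f t0 = beta.
Hypothesis f1_init : f1 t0 = beta0.

Lemma f_is_derive t : t0 < t -> Rbar_lt t tm -> is_derive f t (f1 t).
Proof. intros; eapply deriv_within_interior; eauto. Qed.

Lemma f1_is_derive t : t0 < t -> Rbar_lt t tm -> is_derive f1 t (f2 t).
Proof. intros; eapply deriv_within_interior; eauto. Qed.

Lemma f_right_cont : right_cont t0 f.
Proof. eapply cont_within_left_end; [eapply deriv_within_cont, f_deriv | auto]. Qed.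

Lemma f1_right_cont : right_cont t0 f1.
Proof. eapply cont_within_left_end; [eapply deriv_within_cont, f1_deriv | auto]. Qed.

Lemma f_continuous t : t0 < t -> Rbar_lt t tm -> continuous f t.
Proof. intros; eapply is_derive_continuous, f_is_derive; auto. Qed.

Lemma f1_continuous t : t0 < t -> Rbar_lt t tm -> continuous f1 t.
Proof. intros; eapply is_derive_continuous, f1_is_derive; auto. Qed.

(** [f' > 0] (the first zero of [f'] would be a strict minimum, but there
    [f'' = b f (1 + f) / t^2 > 0]) and hence [f >= beta]. *)
Lemma f1_pos_and_f_ge_beta :
  (forall t, t0 <= t -> Rbar_lt t tm -> 0 < f1 t) /\
  (forall t, t0 <= t -> Rbar_lt t tm -> beta <= f t).
Proof.
  assert (P : forall t, t0 <= t -> Rbar_lt t tm -> 0 < f1 t).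
  { apply (strict_lower_barrier t0 tm f1 f2 0 f1_right_cont f1_is_derive); [lra |].
    intros t Ht Htm' Hpos H0.
    assert (Hft : beta <= f t).
    { rewrite <- f_init. apply (nondecreasing_closed t0 t f f1); [lra | apply f_right_cont | |].
      - intros s Hs. apply f_is_derive; [lra | apply below_tm with t; auto; lra].
      - intros s Hs. left. apply Hpos. lra. }
    rewrite f_ode by (split; [lra | auto]). unfold Fode. rewrite H0.
    assert (0 < b / t ^ 2) by (apply Rdiv_lt_0_compat; auto; apply pow_lt; lra).
    replace (- a / t * 0 + b / t ^ 2 * f t * (1 + f t) + c * 0 ^ 2 / (1 + f t))
      with (b / t ^ 2 * f t * (1 + f t)) by (field; lra).
    apply Rmult_lt_0_compat; [apply Rmult_lt_0_compat |]; lra. }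
  split; auto. intros t Ht Htm'. rewrite <- f_init.
  apply (nondecreasing_of_deriv t0 tm f f1 f_right_cont f_is_derive); auto.
  intros s Hs1 Hs2. left. apply P; auto. lra.
Qed.

Lemma f1_pos t : t0 <= t -> Rbar_lt t tm -> 0 < f1 t.
Proof. apply f1_pos_and_f_ge_beta. Qed.

Lemma f_ge_beta t : t0 <= t -> Rbar_lt t tm -> beta <= f t.
Proof. apply f1_pos_and_f_ge_beta. Qed.

Lemma f_nondecreasing x y : t0 <= x -> x <= y -> Rbar_lt y tm -> f x <= f y.
Proof.
  intros Hx Hxy Hy. apply (nondecreasing_closed x y f f1); auto.
  - destruct (Rle_lt_or_eq_dec _ _ Hx) as [h|<-]; [| apply f_right_cont].
    apply continuous_right_cont, f_continuous; [lra | apply below_tm with y; auto].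
  - intros t Ht. apply f_is_derive; [lra | apply below_tm with y; auto; lra].
  - intros t Ht. left. apply f1_pos; [lra | apply below_tm with y; auto; lra].
Qed.

(** The logarithmic velocity [v = t f' / (1 + f)] satisfies
    [t v' = (1 - a) v + b f + (c - 1) v^2], so it stays above
    [m = min (v(t0), b beta / (a - 1)) / 2 > 0]. *)
Definition velocity (t : R) : R := t * f1 t / (1 + f t).

Lemma velocity_is_derive t : t0 < t -> Rbar_lt t tm ->
  is_derive velocity t (((1 - a) * velocity t + b * f t + (c - 1) * velocity t ^ 2) / t).
Proof.
  intros Ht Htm'. assert (Hf := f_ge_beta t (Rlt_le _ _ Ht) Htm').
  unfold velocity. auto_derive.
  - repeat split; auto; [eexists; apply f1_is_derive; auto | eexists; apply f_is_derive; auto | lra].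
  - rewrite (Derive_of_is_derive _ _ _ (f1_is_derive t Ht Htm')),
      (Derive_of_is_derive _ _ _ (f_is_derive t Ht Htm')).
    rewrite f_ode by (split; [lra | auto]). unfold Fode. field. lra.
Qed.

Lemma velocity_lower_bound :
  exists m, 0 < m /\ forall t, t0 <= t -> Rbar_lt t tm -> m < velocity t.
Proof.
  assert (Hv0 : 0 < velocity t0) by (unfold velocity; rewrite f_init, f1_init; apply Rdiv_lt_0_compat; nra).
  set (m0 := Rmin (velocity t0) (b * beta / (a - 1))).
  assert (Hm1 : m0 <= velocity t0) by apply Rmin_l.
  assert (Hm2 : m0 <= b * beta / (a - 1)) by apply Rmin_r.
  assert (Hm3 : 0 < m0) by (apply Rmin_glb_lt; auto; apply Rdiv_lt_0_compat; nra).
  exists (m0 / 2). split; [lra |].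
  apply (strict_lower_barrier t0 tm velocity
    (fun t => ((1 - a) * velocity t + b * f t + (c - 1) * velocity t ^ 2) / t) (m0 / 2));
    [| apply velocity_is_derive | lra |].
  - apply right_cont_of_freeze. unfold velocity.
    assert (Hf := right_cont_freeze t0 f f_right_cont).
    apply cR_div; [apply cR_mult; [apply Rmax_continuous | apply right_cont_freeze, f1_right_cont] |
                   apply cR_plus; [apply cR_const | exact Hf] |].
    rewrite Rmax_right, f_init by lra. lra.
  - intros t Ht Htm' _ Hvt. rewrite Hvt.
    assert (Hf := f_ge_beta t (Rlt_le _ _ Ht) Htm').
    apply Rdiv_lt_0_compat; [| lra].
    assert (b * beta / (a - 1) * (a - 1) = b * beta) by (field; lra). nra.
Qed.

Lemma log_f1_is_derive t : t0 < t -> Rbar_lt t tm ->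
  is_derive (fun s => c * ln (1 + f s) - ln (f1 s)) t (a / t - b * f t * (1 + f t) / (t ^ 2 * f1 t)).
Proof.
  intros Ht Htm'.
  assert (Hf := f_ge_beta t (Rlt_le _ _ Ht) Htm'). assert (Hf1 := f1_pos t (Rlt_le _ _ Ht) Htm').
  auto_derive.
  - repeat split; auto; try lra; eexists; [apply f_is_derive | apply f1_is_derive]; auto.
  - rewrite (Derive_of_is_derive _ _ _ (f1_is_derive t Ht Htm')),
      (Derive_of_is_derive _ _ _ (f_is_derive t Ht Htm')).
    rewrite f_ode by (split; [lra | auto]). unfold Fode. field. repeat split; lra.
Qed.

Lemma growth_term_bound (m L t : R) : 0 < m -> t0 < t -> Rbar_lt t tm ->
  m < velocity t -> f t <= L -> b * f t * (1 + f t) / (t ^ 2 * f1 t) <= b * L / (m * t0).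
Proof.
  intros Hm Ht Htm' Hvs HfL.
  assert (Hf := f_ge_beta t (Rlt_le _ _ Ht) Htm'). assert (Hf1 := f1_pos t (Rlt_le _ _ Ht) Htm').
  assert (H3 : m * (1 + f t) < t * f1 t).
  { apply Rmult_lt_reg_r with (/ (1 + f t)); [apply Rinv_0_lt_compat; lra |].
    rewrite Rmult_assoc, Rinv_r, Rmult_1_r by lra. exact Hvs. }
  apply Rmult_le_reg_r with (t ^ 2 * f1 t); [apply Rmult_lt_0_compat; [apply pow_lt |]; lra |].
  unfold Rdiv. rewrite Rmult_assoc, Rinv_l, Rmult_1_r by (apply Rgt_not_eq, Rmult_lt_0_compat;
    [apply pow_lt |]; lra).
  apply Rmult_le_reg_r with (m * t0); [nra |].
  replace (b * L * / (m * t0) * (t ^ 2 * f1 t) * (m * t0)) with (b * L * t * (t * f1 t)) by (field; lra).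
  assert (b * f t * (m * (1 + f t)) <= b * f t * (t * f1 t)) by (apply Rmult_le_compat_l; nra).
  assert (b * f t * t0 <= b * L * t) by (apply Rmult_le_compat; nra).
  assert (b * f t * t0 * (t * f1 t) <= b * L * t * (t * f1 t)) by (apply Rmult_le_compat_r; nra).
  nra.
Qed.

(** If [f <= L] on a bounded interval [[t0, r)], then [f'] is bounded on
    [[T0, r)]: by the lower bound on the velocity, [ln f' - c ln (1 + f)] grows at
    most linearly. *)
Lemma f1_bounded (L T0 r : R) : tm = Finite r -> t0 < T0 < r ->
  (forall t, t0 <= t -> t < r -> f t <= L) ->
  exists M1, 0 < M1 /\ forall t, T0 <= t -> t < r -> f1 t <= M1.
Proof.
  intros Hr HT0 HL. destruct velocity_lower_bound as [m [Hm Hv]].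
  assert (Hin : forall t, T0 <= t -> t < r -> t0 < t /\ Rbar_lt t tm) by (rewrite Hr; simpl; intros; lra).
  assert (HLb : beta <= L) by (destruct (Hin T0) as [? ?]; try lra; apply Rle_trans with (f T0);
    [apply f_ge_beta; auto; lra | apply HL; lra]).
  set (K := b * L / (m * t0)).
  assert (HK : 0 <= K) by (apply Rdiv_le_0_compat; nra).
  set (psi := fun t => c * ln (1 + f t) - ln (f1 t) + K * t).
  assert (Hmono : forall t, T0 <= t -> t < r -> psi T0 <= psi t).
  { intros t Ht Htr.
    apply (nondecreasing_closed T0 t psi (fun t => a / t - b * f t * (1 + f t) / (t ^ 2 * f1 t) + K)); auto.
    - destruct (Hin T0) as [H1 H2]; [lra | lra |].
      assert (Hf := f_ge_beta T0 (Rlt_le _ _ H1) H2). assert (Hf1 := f1_pos T0 (Rlt_le _ _ H1) H2).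
      apply continuous_right_cont, cR_plus; [apply cR_minus | apply cR_scal, cR_id].
      + apply cR_scal, cR_ln; [apply cR_plus; [apply cR_const | apply f_continuous; auto] | lra].
      + apply cR_ln; [apply f1_continuous |]; auto.
    - intros s Hs. destruct (Hin s) as [H1 H2]; [lra | lra |].
      replace (a / s - b * f s * (1 + f s) / (s ^ 2 * f1 s) + K)
        with (plus (a / s - b * f s * (1 + f s) / (s ^ 2 * f1 s)) (K * 1)) by (unfold plus; simpl; ring).
      apply (is_derive_plus (V:=R_NormedModule)); [apply log_f1_is_derive; auto |].
      apply is_derive_scal, (is_derive_id (K:=R_AbsRing)).
    - intros s Hs. destruct (Hin s) as [H1 H2]; [lra | lra |].
      assert (b * f s * (1 + f s) / (s ^ 2 * f1 s) <= K) by
        (apply growth_term_bound; auto; [apply Hv; [lra | auto] | apply HL; lra]).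
      assert (0 < a / s) by (apply Rdiv_lt_0_compat; lra). lra. }
  exists (exp (c * ln (1 + L) + K * r - psi T0)). split; [apply exp_pos |].
  intros t Ht Htr. specialize (Hmono t Ht Htr). unfold psi in Hmono.
  destruct (Hin t Ht Htr) as [H1 H2].
  assert (Hf := f_ge_beta t (Rlt_le _ _ H1) H2). assert (Hf1 := f1_pos t (Rlt_le _ _ H1) H2).
  assert (ln (1 + f t) <= ln (1 + L)) by (apply ln_le_compat; [| apply Rplus_le_compat_l, HL]; lra).
  assert (K * t <= K * r) by (apply Rmult_le_compat_l; lra).
  rewrite <- (exp_ln (f1 t)) by lra. apply exp_le_compat.
  assert (c * ln (1 + f t) <= c * ln (1 + L)) by (apply Rmult_le_compat_l; lra).
  unfold psi. lra.
Qed.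

Lemma f_increment_bound (tau s B1 B2 : R) : t0 < tau -> tau <= s -> Rbar_lt s tm ->
  (forall z, tau <= z <= s -> Rabs (f1 z) <= B1 /\ Rabs (f2 z) <= B2) ->
  Rabs (f s - f tau) <= (s - tau) * B1 /\ Rabs (f1 s - f1 tau) <= (s - tau) * B2.
Proof.
  intros Htau Hs Hstm HB.
  assert (Hin : forall z, Rmin tau s <= z <= Rmax tau s -> t0 < z /\ Rbar_lt z tm /\ tau <= z <= s).
  { intros z Hz. rewrite Rmin_left, Rmax_right in Hz by lra.
    split; [lra | split; [apply below_tm with s |]; auto; lra]. }
  rewrite (RInt_of_derive f f1 tau s), (RInt_of_derive f1 f2 tau s) by
    (auto; intros z Hz; first [apply f_is_derive | apply f1_is_derive | apply f1_continuous |
       eapply cont_within_interior; [apply f2_cont | ..]]; try lra; apply below_tm with s; auto; lra).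
  rewrite !Rplus_minus_l. rewrite <- (Rabs_right (s - tau)) by lra.
  split; apply RInt_abs_bound; intros z Hz; destruct (Hin z Hz) as [H1 [H2 H3]];
    try apply HB; auto; [apply f1_continuous | eapply cont_within_interior; [apply f2_cont | ..]]; auto.
Qed.

Lemma f_agrees_with_local (F : R -> R -> R -> R) (Lp d r0 tau r : R) (p q : R -> R) :
  tm = Finite r -> t0 < tau < r -> r - tau <= d -> 0 <= Lp -> d * (1 + Lp) <= /2 ->
  (forall t x y x' y', Rabs (F t x y - F t x' y') <= Lp * (Rabs (x - x') + Rabs (y - y'))) ->
  (forall g1 g2 t, continuous g1 t -> continuous g2 t -> continuous (fun s => F s (g1 s) (g2 s)) t) ->
  (forall t x y, t0 <= t -> Rabs (x - f tau) <= r0 -> Rabs (y - f1 tau) <= r0 ->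
     F t x y = Fode a b c t x y) ->
  (forall s, tau <= s < r -> Rabs (f s - f tau) <= r0 /\ Rabs (f1 s - f1 tau) <= r0) ->
  (forall s, tau <= s < r -> Rabs (p s - f tau) <= r0 /\ Rabs (q s - f1 tau) <= r0) ->
  (forall s, tau <= s < r -> continuous p s) -> (forall s, tau <= s < r -> continuous q s) ->
  (forall s, tau <= s < r -> p s = f tau + RInt q tau s /\
     q s = f1 tau + RInt (fun z => F z (p z) (q z)) tau s) ->
  forall s, tau <= s < r -> f s = p s /\ f1 s = q s.
Proof.
  intros Hr Htau Hd HLp HdL Flip Fcont FE fbox pbox pcont qcont pint.
  assert (Hin : forall z, tau <= z < r -> t0 < z /\ Rbar_lt z tm) by (rewrite Hr; simpl; intros; lra).
  assert (Ef2 : forall z, tau <= z < r -> f2 z = F z (f z) (f1 z)).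
  { intros z Hz. destruct (Hin z Hz). rewrite f_ode by (split; [lra | auto]).
    rewrite FE; [auto | lra | apply fbox, Hz | apply fbox, Hz]. }
  intros s Hs. apply (integral_system_unique F Lp d tau r (f tau) (f1 tau) (4 * r0) f f1 p q); auto.
  - intros z Hz. destruct (Hin z Hz). apply f1_continuous; auto.
  - intros z Hz. destruct (Hin z Hz). apply Fcont; [apply f_continuous | apply f1_continuous]; auto.
  - intros x Hx. destruct (Hin x Hx).
    assert (Hseg : forall z, tau <= z <= x -> t0 < z /\ Rbar_lt z tm) by (intros; apply Hin; lra).
    rewrite (RInt_of_derive f f1 tau x), (RInt_of_derive f1 f2 tau x) by
      (try lra; intros z Hz; destruct (Hseg z Hz); first [apply f_is_derive | apply f1_is_derive |
         apply f1_continuous | eapply cont_within_interior; [apply f2_cont | ..]]; auto).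
    split; auto. f_equal. apply RInt_ext. intros z Hz.
    rewrite Rmin_left, Rmax_right in Hz by lra. apply Ef2. lra.
  - intros x Hx. destruct (fbox x Hx) as [A1 A2]. destruct (pbox x Hx) as [B1 B2].
    generalize (Rabs_sub_pivot (f x) (f tau) (p x)) (Rabs_sub_pivot (f1 x) (f1 tau) (q x)).
    rewrite (Rabs_minus_sym (f tau)), (Rabs_minus_sym (f1 tau)). lra.
Qed.

Lemma f_bounded_data (L r : R) : tm = Finite r -> (forall t, t0 <= t -> t < r -> f t <= L) ->
  exists T0 M1 M2, t0 < T0 < r /\ 0 < M1 /\ forall t, T0 <= t < r ->
    t0 < t /\ Rbar_lt t tm /\ beta <= f t <= L /\ 0 < f1 t <= M1 /\ Rabs (f2 t) <= M2.
Proof.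
  intros Hr HL. assert (Ht0r : t0 < r) by (rewrite Hr in tm_gt_t0; exact tm_gt_t0).
  set (T0 := (t0 + r) / 2).
  destruct (f1_bounded L T0 r Hr ltac:(unfold T0; lra) HL) as [M1 [HM1 HM1b]].
  exists T0, M1, (ode_bound a b c t0 L M1). split; [unfold T0; lra | split; [exact HM1 |]].
  intros t Ht. assert (Hin : t0 < t /\ Rbar_lt t tm) by (rewrite Hr; simpl; unfold T0 in Ht; lra).
  destruct Hin as [H1 H2].
  assert (Hf := f_ge_beta t (Rlt_le _ _ H1) H2). assert (Hf1 := f1_pos t (Rlt_le _ _ H1) H2).
  assert (HfL : f t <= L) by (apply HL; lra). assert (Hf1M : f1 t <= M1) by (apply HM1b; lra).
  repeat split; auto; try lra.
  rewrite f_ode by (split; [lra | auto]).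
  apply Fode_bound; try lra; rewrite Rabs_right; lra.
Qed.

Lemma f_stays_in_box (r tau d r0 M1 M2 : R) : tm = Finite r -> t0 < tau < r -> r - tau <= d ->
  d * M1 <= r0 -> d * M2 <= r0 ->
  (forall z, tau <= z < r -> Rabs (f1 z) <= M1 /\ Rabs (f2 z) <= M2) ->
  forall s, tau <= s < r -> Rabs (f s - f tau) <= r0 /\ Rabs (f1 s - f1 tau) <= r0.
Proof.
  intros Hr Htau Hd HdM1 HdM2 HM s Hs.
  destruct (f_increment_bound tau s M1 M2) as [B1 B2];
    [lra | lra | rewrite Hr; simpl; lra | intros z Hz; apply HM; lra |].
  destruct (HM tau) as [H1 H2]; [lra |].
  assert (0 <= M1 /\ 0 <= M2) as [? ?] by (split; eapply Rle_trans; [apply Rabs_pos | exact H1 |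
    apply Rabs_pos | exact H2]).
  assert ((s - tau) * M1 <= d * M1) by (apply Rmult_le_compat_r; lra).
  assert ((s - tau) * M2 <= d * M2) by (apply Rmult_le_compat_r; lra).
  lra.
Qed.

Lemma extension_near (r tau d r0 X Y M1 M2 : R) :
  tm = Finite r -> t0 < tau < r -> r < tau + d -> d <= 1 -> 0 < r0 ->
  d * (1 + ode_lip a b c t0 X Y) <= /2 -> d * (Rabs (f1 tau) + ode_bound a b c t0 X Y) <= r0 ->
  d * M1 <= r0 -> d * M2 <= r0 ->
  0 < f tau - r0 -> f tau + r0 <= X -> Rabs (f1 tau - r0) <= Y -> Rabs (f1 tau + r0) <= Y ->
  (forall z, tau <= z < r -> Rabs (f1 z) <= M1 /\ Rabs (f2 z) <= M2) ->
  exists p q : R -> R,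
    (forall t, tau < t < tau + d -> is_derive p t (q t) /\
       is_derive q t (Fode a b c t (p t) (q t)) /\ 0 < p t) /\
    (forall s, tau < s < r -> f s = p s /\ f1 s = q s).
Proof.
  intros Hr Htau Hrd Hd1 Hr0 HdL HdB HdM1 HdM2 Hx0 HX HY1 HY2 HM.
  set (x0 := f tau) in *. set (y0 := f1 tau) in *.
  set (MF := ode_bound a b c t0 X Y) in *. set (Lp := ode_lip a b c t0 X Y) in *.
  assert (HY : 0 <= Y) by (eapply Rle_trans; [apply Rabs_pos | exact HY2]).
  assert (HMF : 0 <= MF /\ 0 <= Lp) by (apply ode_constants_nonneg; lra). destruct HMF as [HMF HLp].
  set (F := Fclamp a b c t0 (x0 - r0) (x0 + r0) (y0 - r0) (y0 + r0)).
  assert (Hbox_x : 0 <= x0 - r0 <= x0 + r0 /\ x0 + r0 <= X) by lra.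
  assert (Hbox_y : y0 - r0 <= y0 + r0 /\ Rabs (y0 - r0) <= Y /\ Rabs (y0 + r0) <= Y) by lra.
  assert (Fc : forall g1 g2 t, continuous g1 t -> continuous g2 t ->
      continuous (fun s => F s (g1 s) (g2 s)) t)
    by (intros; eapply (Fclamp_continuous a b c t0); eauto).
  assert (Fb : forall t x y, Rabs (F t x y) <= MF)
    by (intros; eapply (Fclamp_bound a b c t0); eauto; lra).
  assert (Fl : forall t x y x' y', Rabs (F t x y - F t x' y') <= Lp * (Rabs (x - x') + Rabs (y - y')))
    by (intros; eapply (Fclamp_lip a b c t0); eauto; lra).
  assert (FE : forall t x y, t0 <= t -> Rabs (x - x0) <= r0 -> Rabs (y - y0) <= r0 ->
      F t x y = Fode a b c t x y) by (intros; apply Fclamp_in_box; [| split_Rabs ..]; lra).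
  set (p := pic_lim_x F tau x0 y0). set (q := pic_lim_y F tau x0 y0).
  assert (Hnear : forall t, tau <= t < tau + d -> Rabs (t - tau) < d) by (intros; rewrite Rabs_right; lra).
  assert (pbox : forall t, tau <= t < tau + d -> Rabs (p t - x0) <= r0 /\ Rabs (q t - y0) <= r0).
  { intros t Ht. apply (pic_lim_in_box F MF Lp tau x0 y0 d); auto. }
  assert (fbox := f_stays_in_box r tau d r0 M1 M2 Hr Htau ltac:(lra) HdM1 HdM2 HM).
  exists p, q. split.
  - intros t Ht. destruct (pic_lim_derive F MF Lp tau x0 y0 d Fc Fb Fl Hd1 HLp HdL t) as [D1 D2];
      [apply Hnear; lra |].
    destruct (pbox t) as [B1 B2]; [lra |].
    rewrite FE in D2 by (auto; lra). split; [exact D1 | split; [exact D2 |]].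
    revert B1. split_Rabs; lra.
  - intros s Hs. apply (f_agrees_with_local F Lp d r0 tau r p q); auto; try lra.
    + intros z Hz. apply pbox. lra.
    + intros z Hz. apply (pic_lim_x_continuous F MF Lp tau x0 y0 d); auto. apply Hnear; lra.
    + intros z Hz. apply (pic_lim_y_continuous F MF Lp tau x0 y0 d); auto. apply Hnear; lra.
    + intros z Hz. assert (Hz' : Rabs (z - tau) < d) by (apply Hnear; lra).
      split; [apply (pic_lim_integral_x F MF Lp tau x0 y0 d) |
              apply (pic_lim_integral_y F MF Lp tau x0 y0 d)]; auto.
Qed.

Lemma local_extension (L r : R) : tm = Finite r -> (forall t, t0 <= t -> t < r -> f t <= L) ->
  exists tau T1 (p q : R -> R), t0 < tau < r /\ r < T1 /\
    (forall t, tau < t < T1 -> is_derive p t (q t) /\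
       is_derive q t (Fode a b c t (p t) (q t)) /\ 0 < p t) /\
    (forall s, tau < s < r -> f s = p s /\ f1 s = q s).
Proof.
  intros Hr HL. destruct (f_bounded_data L r Hr HL) as [T0 [M1 [M2 [HT0 [HM1 Hdata]]]]].
  assert (HM2 : 0 <= M2) by (destruct (Hdata T0) as [_ [_ [_ [_ H]]]]; [lra |];
    eapply Rle_trans; [apply Rabs_pos | exact H]).
  assert (HLb : beta <= L) by (destruct (Hdata T0) as [_ [_ [H _]]]; lra).
  set (r0 := beta / 2). set (X := L + beta). set (Y := M1 + beta).
  assert (Er0 : r0 = beta / 2) by reflexivity. assert (EX : X = L + beta) by reflexivity.
  assert (EY : Y = M1 + beta) by reflexivity.
  assert (HMF : 0 <= ode_bound a b c t0 X Y /\ 0 <= ode_lip a b c t0 X Y)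
    by (apply ode_constants_nonneg; lra). destruct HMF as [HMF HLp].
  assert (HK : 0 < Y + ode_bound a b c t0 X Y + M1 + M2 + 1) by lra.
  destruct (step_size _ _ r0 (r - T0) HK HLp ltac:(lra) ltac:(lra))
    as [d [Hd0 [Hd1 [HdL [HdK Hdgap]]]]].
  assert (HdK' : forall Z, 0 <= Z <= Y + ode_bound a b c t0 X Y + M1 + M2 + 1 -> d * Z <= r0)
    by (intros Z HZ; eapply Rle_trans; [apply Rmult_le_compat_l | exact HdK]; lra).
  set (tau := Rmax T0 (r - d / 2)).
  assert (Htau : T0 <= tau /\ r - d / 2 <= tau /\ tau < r)
    by (unfold tau; split; [apply Rmax_l | split; [apply Rmax_r | apply Rmax_lub_lt; lra]]).
  destruct (Hdata tau) as [Ht1 [_ [Hx0 [Hy0 _]]]]; [lra |].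
  assert (Hf1tau : Rabs (f1 tau) = f1 tau) by (apply Rabs_right; lra).
  destruct (extension_near r tau d r0 X Y M1 M2) as [p [q [Hpq Hagree]]]; auto; try lra.
  - apply HdK'. rewrite Hf1tau. lra.
  - apply HdK'. lra.
  - apply HdK'. lra.
  - apply Rabs_le. lra.
  - apply Rabs_le. lra.
  - intros z Hz. destruct (Hdata z) as [_ [_ [_ [H1 H2]]]]; [lra |].
    rewrite Rabs_right by lra. split; lra.
  - exists tau, (tau + d), p, q. split; [lra | split; [lra | split; assumption]].
Qed.

Lemma continuation (L r : R) : tm = Finite r -> (forall t, t0 <= t -> t < r -> f t <= L) ->
  exists (t1 : Rbar) (h : R -> R), Rbar_lt tm t1 /\ is_sol a b c t0 beta beta0 t1 h /\
    (forall t, Ico t0 tm t -> h t = f t).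
Proof.
  intros Hr HL.
  destruct (local_extension L r Hr HL) as [tau [T1 [p [q [Htau [HT1 [Hpq Hagree]]]]]]].
  assert (Df : deriv_within (Ico t0 (Finite r)) f f1) by (rewrite <- Hr; exact f_deriv).
  assert (Df1 : deriv_within (Ico t0 (Finite r)) f1 f2) by (rewrite <- Hr; exact f1_deriv).
  assert (Cf2 : cont_within (Ico t0 (Finite r)) f2) by (rewrite <- Hr; exact f2_cont).
  assert (Eode : forall t, t0 <= t < r -> f2 t = Fode a b c t (f t) (f1 t))
    by (intros t Ht; apply f_ode; rewrite Hr; split; simpl; lra).
  rewrite Hr.
  assert (Hord : t0 <= tau < r /\ r < T1) by lra.
  assert (Cp : forall t, tau < t < T1 -> continuous p t /\ continuous q t)
    by (intros t Ht; destruct (Hpq t Ht) as [D1 [D2 _]]; split; eapply is_derive_continuous; eauto).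
  assert (CF : forall t, tau < t < T1 -> continuous (fun s => Fode a b c s (p s) (q s)) t).
  { intros t Ht. destruct (Cp t Ht). destruct (Hpq t Ht) as [_ [_ Hp]].
    apply Fode_continuous; auto; [apply cR_id | lra | lra]. }
  exists (Finite T1), (glue r f p). split; [simpl; lra | split].
  - exists (glue r f1 q), (glue r f2 (fun s => Fode a b c s (p s) (q s))).
    split; [| split; [| split; [| split; [| split]]]].
    + apply (deriv_within_glue t0 tau r T1 Hord); auto; apply Hpq.
    + apply (deriv_within_glue t0 tau r T1 Hord); auto; [apply Hpq |].
      intros s Hs. destruct (Hagree s Hs) as [E1 E2]. split; auto.
      rewrite Eode, E1, E2 by lra. reflexivity.
    + apply (cont_within_glue t0 tau r T1 Hord); auto.
      intros s Hs. destruct (Hagree s Hs) as [E1 E2]. rewrite Eode, E1, E2 by lra. reflexivity.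
    + intros t [Ht Htt]. simpl in Htt. unfold glue. destruct (Rlt_dec t r) as [ht|ht].
      * rewrite Eode by lra.
        assert (Hf := f_ge_beta t Ht ltac:(rewrite Hr; simpl; lra)).
        split; [lra | unfold Fode; field; lra].
      * destruct (Hpq t ltac:(lra)) as [_ [_ Hp]]. split; [lra | unfold Fode; field; lra].
    + unfold glue. destruct (Rlt_dec t0 r); [exact f_init | lra].
    + unfold glue. destruct (Rlt_dec t0 r); [exact f1_init | lra].
  - intros t [Ht Htt]. simpl in Htt. unfold glue. destruct (Rlt_dec t r); [auto | lra].
Qed.

Lemma log1pf_is_derive t : t0 < t -> Rbar_lt t tm ->
  is_derive (fun s => ln (1 + f s)) t (f1 t / (1 + f t)).
Proof.
  intros Ht Htm'. assert (Hf := f_ge_beta t (Rlt_le _ _ Ht) Htm').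
  auto_derive; [repeat split; [eexists; apply f_is_derive; auto | lra] |].
  rewrite (Derive_of_is_derive _ _ _ (f_is_derive t Ht Htm')). field. lra.
Qed.

(** On an infinite interval, [v >= m] gives [ln (1 + f) >= m ln t + const]. *)
Lemma f_unbounded_at_infinity : tm = p_infty -> forall M, to_left tm (fun t => M < f t).
Proof.
  intros Hr M. destruct velocity_lower_bound as [m [Hm Hv]].
  set (T := t0 + 1). assert (HT : 0 < T) by (unfold T; lra).
  assert (Hin : forall s, T <= s -> t0 < s /\ Rbar_lt s tm) by (rewrite Hr; unfold T; simpl; intros; lra).
  assert (Hg : forall t, T <= t -> ln (1 + f T) + m * (ln t - ln T) <= ln (1 + f t)).
  { intros t Ht. destruct (Hin t Ht) as [_ Htm'].
    apply (comparison_of_deriv T tm (fun s => ln (1 + f s)) (fun s => f1 s / (1 + f s)) ln (fun s => / s) m); auto.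
    - intros s Hs _. destruct (Hin s Hs) as [H1 H2]. apply log1pf_is_derive; auto.
    - intros s Hs _. apply is_derive_ln. unfold T in Hs; lra.
    - intros s Hs _. destruct (Hin s) as [H1 H2]; [lra |].
      assert (Hvs := Hv s (Rlt_le _ _ H1) H2). unfold velocity in Hvs.
      assert (Hf := f_ge_beta s (Rlt_le _ _ H1) H2).
      replace (f1 s / (1 + f s)) with ((s * f1 s / (1 + f s)) * / s) by (field; lra).
      apply Rmult_le_compat_r; [left; apply Rinv_0_lt_compat |]; lra. }
  set (W := ln (1 + Rabs M) + 1).
  assert (HW : 0 < W) by (unfold W; generalize (ln_le_compat 1 (1 + Rabs M) ltac:(lra)
    ltac:(generalize (Rabs_pos M); lra)); rewrite ln_1; lra).
  assert (HTe : T <= T * exp (W / m)).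
  { rewrite <- (Rmult_1_r T) at 1. apply Rmult_le_compat_l; [lra |].
    rewrite <- exp_0. apply exp_le_compat. apply Rlt_le, Rdiv_lt_0_compat; lra. }
  apply (to_left_of_tail (T * exp (W / m))); [apply Hin; lra |].
  intros s Hs _. destruct (Hin s) as [H1 H2]; [lra |]. specialize (Hg s ltac:(lra)).
  assert (Hf := f_ge_beta s (Rlt_le _ _ H1) H2).
  assert (HfT : 0 <= ln (1 + f T)).
  { rewrite <- ln_1. apply ln_le_compat; [lra |]. generalize (f_ge_beta T); intros HH.
    destruct (Hin T) as [HT1 HT2]; [lra |]. specialize (HH (Rlt_le _ _ HT1) HT2). lra. }
  assert (Hln : W / m <= ln s - ln T).
  { assert (ln (T * exp (W / m)) <= ln s) by (apply ln_le_compat; [apply Rmult_lt_0_compat; [| apply exp_pos] |]; lra).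
    rewrite ln_mult, ln_exp in H by (try apply exp_pos; lra). lra. }
  assert (W <= m * (ln s - ln T)).
  { replace W with (m * (W / m)) by (field; lra). apply Rmult_le_compat_l; lra. }
  assert (1 + Rabs M < 1 + f s).
  { apply ln_lt_inv; [generalize (Rabs_pos M); lra | lra |]. unfold W in *. lra. }
  generalize (RRle_abs M). lra.
Qed.

(** On a finite interval, boundedness of the (nondecreasing) [f] would allow a
    continuation. *)
Lemma f_unbounded_finite (r : R) : tm = Finite r ->
  ~ (exists (t1 : Rbar) (h : R -> R), Rbar_lt tm t1 /\ is_sol a b c t0 beta beta0 t1 h /\
       (forall t, Ico t0 tm t -> h t = f t)) ->
  forall M, to_left tm (fun t => M < f t).
Proof.
  intros Hr Hmax M.
  destruct (classic (exists t, t0 <= t /\ t < r /\ M < f t)) as [[t [Ht1 [Ht2 Ht3]]]|Hn].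
  - apply (to_left_of_tail t); [rewrite Hr; exact Ht2 |]. intros s Hs Hsr.
    generalize (f_nondecreasing t s Ht1 Hs Hsr). lra.
  - exfalso. apply Hmax, (continuation M r Hr).
    intros t Ht Htr. apply Rnot_lt_le. intro Hlt. apply Hn. exists t. auto.
Qed.

Lemma f_blows_up :
  ~ (exists (t1 : Rbar) (h : R -> R), Rbar_lt tm t1 /\ is_sol a b c t0 beta beta0 t1 h /\
       (forall t, Ico t0 tm t -> h t = f t)) ->
  filterlim f (to_left tm) (Rbar_locally p_infty).
Proof.
  intros Hmax P [M HP]. unfold filtermap.
  apply (filter_imp (fun t => M < f t)); [intros t Ht; apply HP; exact Ht |].
  destruct (Rbar_finite_or_infinite tm t0 tm_gt_t0) as [[r Hr]|Hr].
  - apply (f_unbounded_finite r Hr Hmax).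
  - apply (f_unbounded_at_infinity Hr).
Qed.

(** The integrand of [g], frozen to the left of [t0] so that it is continuous
    on all of [(-oo, tm)], its primitive [G], and [Lam = theta A G - ln (1 + f)],
    so that [eta = exp Lam] on [[t0, tm)]. *)
Definition g_integrand (s : R) : R :=
  f (Rmax s t0) * (1 + f (Rmax s t0)) / (Rmax s t0 ^ 2 * f1 (Rmax s t0)).

Definition G (t : R) : R := RInt g_integrand t0 t.

Variables theta A : R.

Definition Lam (t : R) : R := theta * A * G t - ln (1 + f t).

Lemma g_integrand_continuous_pos (t : R) : Rbar_lt t tm ->
  continuous g_integrand t /\ 0 < g_integrand t.
Proof.
  intros Ht. assert (Hm : t0 <= Rmax t t0) by apply Rmax_r.
  assert (Hmt : Rbar_lt (Rmax t t0) tm) by (unfold Rmax; destruct (Rle_dec t t0); auto).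
  assert (Hf := f_ge_beta _ Hm Hmt). assert (Hf1 := f1_pos _ Hm Hmt).
  assert (Cf := continuous_freeze t0 tm f f_right_cont f_continuous t Ht).
  assert (Cf1 := continuous_freeze t0 tm f1 f1_right_cont f1_continuous t Ht).
  assert (0 < Rmax t t0 ^ 2 * f1 (Rmax t t0)) by (apply Rmult_lt_0_compat; [apply pow_lt |]; lra).
  split; [| apply Rdiv_lt_0_compat; [apply Rmult_lt_0_compat |]; lra].
  apply cR_div; [apply cR_mult; [| apply cR_plus; [apply cR_const |]] | apply cR_mult; [apply cR_pow, Rmax_continuous |] |]; auto; lra.
Qed.

Lemma G_is_derive (t : R) : Rbar_lt t tm -> is_derive G t (g_integrand t).
Proof.
  intros Ht. apply (is_derive_RInt _ _ t0); [| apply (proj1 (g_integrand_continuous_pos t Ht))].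
  destruct (room_below t tm Ht) as [d [Hd H]].
  apply locally_eps. exists d. split; auto. intros y Hy. apply Rabs_def2 in Hy.
  apply (RInt_correct (V:=R_CompleteNormedModule)), ex_RInt_cont. intros z Hz.
  apply (proj1 (g_integrand_continuous_pos z ltac:(apply below_tm with (Rmax t0 y); [apply Hz |
    unfold Rmax; destruct (Rle_dec t0 y); [apply H; lra | auto]]))).
Qed.

Lemma eta_exp_Lam (t : R) : t0 <= t -> Rbar_lt t tm -> eta A theta t0 f t = exp (Lam t).
Proof.
  intros Ht Htm'. unfold eta, gfun, Lam, G.
  rewrite (RInt_ext _ g_integrand).
  2:{ intros x Hx. rewrite Rmin_left, Rmax_right in Hx by lra. unfold g_integrand.
      rewrite Rmax_left by lra.
      rewrite (is_derive_unique _ _ _ (f_is_derive x (proj1 Hx) (below_tm _ _ _ (Rlt_le _ _ (proj2 Hx)) Htm'))).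
      reflexivity. }
  set (I := RInt g_integrand t0 t).
  assert (Hf : 0 < 1 + f t) by (generalize (f_ge_beta t Ht Htm'); lra).
  unfold Rpower. rewrite ln_exp.
  replace (theta * A * I - ln (1 + f t)) with (-(theta * (- A * I)) + - ln (1 + f t)) by ring.
  rewrite exp_plus, !exp_Ropp, exp_ln by lra.
  assert (0 < exp (theta * (- A * I))) by apply exp_pos.
  field. split; lra.
Qed.

(** [f] continued to the left of [t0] by its tangent line: a function with a
    two-sided derivative at [t0]. *)
Definition f_tangent_ext (s : R) : R := if Rlt_dec s t0 then beta + beta0 * (s - t0) else f s.

Lemma f_tangent_ext_is_derive (t : R) : t0 <= t -> Rbar_lt t tm -> is_derive f_tangent_ext t (f1 t).
Proof.
  intros Ht Htm'. destruct (Rle_lt_or_eq_dec _ _ Ht) as [h|<-].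
  - apply is_derive_ext_loc with f; [| apply f_is_derive; auto].
    apply locally_eps. exists (t - t0). split; [lra |]. intros y Hy. apply Rabs_def2 in Hy.
    unfold f_tangent_ext. destruct (Rlt_dec y t0); [lra | auto].
  - apply is_derive_Reals. intros e He.
    specialize (f_deriv t0 (conj (Rle_refl t0) Htm')) as Hd.
    apply filterlim_locally with (eps := mkposreal e He) in Hd.
    apply within_eps in Hd. destruct Hd as [d [Hd H]].
    destruct (room_below t0 tm Htm') as [d2 [Hd2 H2]].
    assert (Hm : 0 < Rmin d d2) by (apply Rmin_glb_lt; auto).
    exists (mkposreal _ Hm). intros h Hh0 Hh. simpl in Hh.
    assert (Rmin d d2 <= d) by apply Rmin_l. assert (Rmin d d2 <= d2) by apply Rmin_r.
    apply Rabs_def2 in Hh. unfold f_tangent_ext.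
    destruct (Rlt_dec t0 t0) as [hh|_]; [lra |]. destruct (Rlt_dec (t0 + h) t0) as [hl|hl].
    + replace ((beta + beta0 * (t0 + h - t0) - f t0) / h - f1 t0) with 0
        by (rewrite f_init, f1_init; field; auto).
      rewrite Rabs_R0; lra.
    + specialize (H (t0 + h)). replace (t0 + h - t0) with h in H by ring.
      apply H; [apply Rabs_def1; lra | repeat split; [lra | apply H2; lra | lra]].
Qed.

Lemma eta_C1 : C1_on (Ico t0 tm) (eta A theta t0 f).
Proof.
  exists (fun t => exp (Lam t) * (theta * A * g_integrand t - f1 t / (1 + f t))). split.
  - apply deriv_within_of_is_derive with
      (fun s => exp (theta * A * G s - ln (1 + f_tangent_ext s))).
    + intros t [Ht Htm'].
      assert (HfE : f_tangent_ext t = f t) by (unfold f_tangent_ext; destruct (Rlt_dec t t0); [lra | auto]).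
      assert (Hpos : 0 < 1 + f t) by (generalize (f_ge_beta t Ht Htm'); lra).
      assert (HG := G_is_derive t Htm'). assert (HF := f_tangent_ext_is_derive t Ht Htm').
      auto_derive.
      * repeat split; [eexists; exact HG | eexists; exact HF | rewrite HfE; lra].
      * rewrite (Derive_of_is_derive _ _ _ HG), (Derive_of_is_derive _ _ _ HF).
        unfold Lam, Rminus. rewrite HfE. field. lra.
    + intros t [Ht Htm']. rewrite (eta_exp_Lam t Ht Htm').
      unfold Lam, f_tangent_ext. destruct (Rlt_dec t t0); [lra | auto].
  - apply cont_within_of_continuous with
      (fun s => exp (theta * A * G s - ln (1 + f (Rmax s t0))) *
                (theta * A * g_integrand s - f1 (Rmax s t0) / (1 + f (Rmax s t0)))).
    + intros t [Ht Htm'].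
      assert (Hpos : 0 < 1 + f (Rmax t t0)) by (rewrite Rmax_left by lra; generalize (f_ge_beta t Ht Htm'); lra).
      assert (HGc := is_derive_continuous _ _ _ (G_is_derive t Htm')).
      assert (Hh := proj1 (g_integrand_continuous_pos t Htm')).
      assert (Cf := continuous_freeze t0 tm f f_right_cont f_continuous t Htm').
      assert (Cf1 := continuous_freeze t0 tm f1 f1_right_cont f1_continuous t Htm').
      assert (C1f : continuous (fun s => 1 + f (Rmax s t0)) t) by (apply cR_plus; [apply cR_const | auto]).
      apply cR_mult; [apply cR_exp, cR_minus; [apply cR_scal | apply cR_ln] |
                      apply cR_minus; [apply cR_scal | apply cR_div]]; auto; lra.
    + intros t [Ht Htm']. unfold Lam. rewrite Rmax_left by lra. reflexivity.
Qed.

(** The quantity [phi = t^2 f'^2 / ((1 + f)^2 f) = v^2 / f], whose size decides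
    whether [Lam] decreases, obeys [phi' = (f'/(1 + f)) B] with
    [B = 2 b - 2 (a - 1) v / f - (3 - 2 c) phi - phi / f]. *)
Definition phi (t : R) : R := t ^ 2 * f1 t ^ 2 / ((1 + f t) ^ 2 * f t).

Definition phi_rate (t : R) : R :=
  2 * b - 2 * (a - 1) * velocity t / f t - (3 - 2 * c) * phi t - phi t / f t.

Lemma phi_is_derive (t : R) : t0 < t -> Rbar_lt t tm ->
  is_derive phi t (f1 t / (1 + f t) * phi_rate t).
Proof.
  intros Ht Htm'.
  assert (Hf := f_ge_beta t (Rlt_le _ _ Ht) Htm'). assert (Hf1 := f1_pos t (Rlt_le _ _ Ht) Htm').
  unfold phi. auto_derive.
  - assert (Df := f_is_derive t Ht Htm'). assert (Df1 := f1_is_derive t Ht Htm').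
    repeat split; try (eexists; eassumption).
    apply Rgt_not_eq. repeat apply Rmult_lt_0_compat; lra.
  - rewrite (Derive_of_is_derive _ _ _ (f1_is_derive t Ht Htm')),
      (Derive_of_is_derive _ _ _ (f_is_derive t Ht Htm')).
    rewrite f_ode by (split; [lra | auto]).
    unfold phi_rate, phi, velocity, Fode. field. repeat split; lra.
Qed.

Lemma phi_pos (t : R) : t0 < t -> Rbar_lt t tm -> 0 < phi t.
Proof.
  intros Ht Htm'.
  assert (Hf := f_ge_beta t (Rlt_le _ _ Ht) Htm'). assert (Hf1 := f1_pos t (Rlt_le _ _ Ht) Htm').
  unfold phi. apply Rdiv_lt_0_compat; [apply Rmult_lt_0_compat; apply pow_lt; lra |].
  apply Rmult_lt_0_compat; [apply pow_lt |]; lra.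
Qed.

Lemma Lam_is_derive (t : R) : t0 < t -> Rbar_lt t tm ->
  is_derive Lam t (theta * A * g_integrand t - f1 t / (1 + f t)).
Proof.
  intros Ht Htm'. unfold Lam.
  replace (theta * A * g_integrand t - f1 t / (1 + f t))
    with (minus (theta * A * g_integrand t) (f1 t / (1 + f t))) by reflexivity.
  apply (is_derive_minus (V:=R_NormedModule)); [apply is_derive_scal, G_is_derive, Htm' |].
  apply log1pf_is_derive; auto.
Qed.

Lemma g_integrand_phi (t : R) : t0 < t -> Rbar_lt t tm ->
  g_integrand t = (f1 t / (1 + f t)) / phi t.
Proof.
  intros Ht Htm'.
  assert (Hf := f_ge_beta t (Rlt_le _ _ Ht) Htm'). assert (Hf1 := f1_pos t (Rlt_le _ _ Ht) Htm').
  unfold g_integrand, phi. rewrite Rmax_left by lra. field. repeat split; lra.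
Qed.

Hypothesis c_lt_3_2 : c < 3 / 2.
Hypothesis theta_ge_1 : 1 <= theta.
Hypothesis A_pos : 0 < A.
Hypothesis A_theta_small : A * theta < 2 * b / (3 - 2 * c).
Hypothesis f_to_infinity : filterlim f (to_left tm) (Rbar_locally p_infty).

(** Thresholds: [k = A theta < k1 < k2 < kbar = 2b/(3-2c)]; once [f >= F0] and
    [phi <= k2], [phi_rate >= d0 > 0]. *)
Let k := A * theta.
Let kbar := 2 * b / (3 - 2 * c).
Let k1 := (k + kbar) / 2.
Let k2 := (k1 + kbar) / 2.
Let d0 := (2 * b - (3 - 2 * c) * k2) / 2.
Let eps := d0 / (4 * (a - 1)).
Let F0 := Rmax 1 (Rmax (2 * k2 / d0) (k2 / eps ^ 2)).

Lemma thresholds : 0 < k /\ k < k1 /\ k1 < k2 /\ 0 < d0 /\ 0 < eps.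
Proof.
  assert (Hk : 0 < k) by (unfold k; nra).
  assert (Hkb : (3 - 2 * c) * kbar = 2 * b) by (unfold kbar; field; lra).
  assert ((3 - 2 * c) * k < (3 - 2 * c) * kbar) by (apply Rmult_lt_compat_l; unfold k, kbar; lra).
  assert (k < kbar) by (apply Rmult_lt_reg_l with (3 - 2 * c); lra).
  assert (Hd0 : 0 < d0) by (unfold d0, k2, k1; lra).
  unfold k2, k1. repeat split; try lra. unfold eps. apply Rdiv_lt_0_compat; lra.
Qed.

Lemma decay_rate_pos : 0 < 1 - k / k1.
Proof.
  destruct thresholds as [Hk [Hk1 _]]. assert (k / k1 < 1); [| lra].
  apply Rmult_lt_reg_r with k1; [lra |]. unfold Rdiv. rewrite Rmult_assoc, Rinv_l; lra.
Qed.

Lemma phi_rate_lower_bound (t : R) : t0 < t -> Rbar_lt t tm -> F0 <= f t -> phi t <= k2 ->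
  d0 <= phi_rate t.
Proof.
  intros Ht Htm' HF Hp. destruct thresholds as [Hk [Hk1 [Hk2 [Hd0 Heps]]]].
  assert (Hf := f_ge_beta t (Rlt_le _ _ Ht) Htm'). assert (Hf1 := f1_pos t (Rlt_le _ _ Ht) Htm').
  assert (HF1 : 1 <= F0) by apply Rmax_l.
  assert (HF2 : 2 * k2 / d0 <= F0) by (eapply Rle_trans; [apply Rmax_l | apply Rmax_r]).
  assert (HF3 : k2 / eps ^ 2 <= F0) by (eapply Rle_trans; [apply Rmax_r | apply Rmax_r]).
  assert (Hpv : phi t = velocity t ^ 2 / f t) by (unfold phi, velocity; field; lra).
  unfold phi_rate. rewrite Hpv in *.
  assert (Hdiv : forall x, 0 < x -> x <= F0 -> k2 / f t <= k2 / x).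
  { intros x Hx HxF. unfold Rdiv. apply Rmult_le_compat_l; [lra |]. apply Rinv_le_contravar; lra. }
  apply (drift_lower_bound a b c (f t) (velocity t) k2 d0 eps); auto; try lra.
  - unfold velocity. apply Rdiv_le_0_compat; nra.
  - unfold d0; lra.
  - unfold eps; field; lra.
  - apply Rle_trans with (k2 / (2 * k2 / d0)); [apply Hdiv; [apply Rdiv_lt_0_compat | exact HF2] |
      right; field]; lra.
  - assert (0 < eps ^ 2) by (apply pow_lt; lra).
    apply Rle_trans with (k2 / (k2 / eps ^ 2)); [apply Hdiv; [apply Rdiv_lt_0_compat | exact HF3] |
      right; field]; lra.
Qed.

Lemma f_eventually_above (M : R) :
  exists T, t0 < T /\ Rbar_lt T tm /\ forall s, T <= s -> Rbar_lt s tm -> M < f s.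
Proof. apply to_left_eventually; auto. apply f_to_infinity. exists M. auto. Qed.

Lemma log1pf_nonneg (t : R) : t0 <= t -> Rbar_lt t tm -> 0 <= ln (1 + f t).
Proof.
  intros Ht Htm'. rewrite <- ln_1. apply ln_le_compat; [lra |].
  generalize (f_ge_beta t Ht Htm'). lra.
Qed.

(** [phi] eventually exceeds [k2]: otherwise, once [f >= F0], [phi] would grow
    like [d0 ln (1 + f)], which tends to infinity. *)
Lemma phi_eventually_large :
  exists T2, t0 < T2 /\ Rbar_lt T2 tm /\ k2 < phi T2 /\
    forall s, T2 <= s -> Rbar_lt s tm -> F0 <= f s.
Proof.
  destruct thresholds as [Hk [Hk1 [Hk2 [Hd0 Heps]]]].
  destruct (f_eventually_above F0) as [T1 [HT1 [HT1tm HT1f]]].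
  apply NNPP. intro Hn.
  assert (Hle : forall t, T1 <= t -> Rbar_lt t tm -> phi t <= k2).
  { intros t Ht Htm'. apply Rnot_lt_le. intro Hlt. apply Hn. exists t.
    repeat split; auto; [lra |]. intros s Hs Hstm. left. apply HT1f; auto; lra. }
  assert (Hg : forall t, T1 <= t -> Rbar_lt t tm ->
             phi T1 + d0 * (ln (1 + f t) - ln (1 + f T1)) <= phi t).
  { apply (comparison_of_deriv T1 tm phi (fun t => f1 t / (1 + f t) * phi_rate t)
             (fun s => ln (1 + f s)) (fun t => f1 t / (1 + f t)) d0).
    - intros t Ht Htm'. apply phi_is_derive; auto. lra.
    - intros t Ht Htm'. apply log1pf_is_derive; auto. lra.
    - intros t Ht Htm'.
      assert (d0 <= phi_rate t) by (apply phi_rate_lower_bound; try lra; auto;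
        [left; apply HT1f | apply Hle]; auto; lra).
      assert (0 < f1 t / (1 + f t)).
      { assert (Hf := f_ge_beta t ltac:(lra) Htm'). apply Rdiv_lt_0_compat; [apply f1_pos |]; auto; lra. }
      nra. }
  assert (Hp1 : 0 < phi T1) by (apply phi_pos; auto).
  destruct (f_eventually_above (exp (ln (1 + f T1) + (k2 + 1) / d0))) as [T3 [HT3 [HT3tm HT3f]]].
  set (t := Rmax T1 T3). assert (T1 <= t) by apply Rmax_l. assert (T3 <= t) by apply Rmax_r.
  assert (Httm : Rbar_lt t tm) by (unfold t, Rmax; destruct (Rle_dec T1 T3); auto).
  assert (Hut : ln (1 + f T1) + (k2 + 1) / d0 < ln (1 + f t)).
  { rewrite <- (ln_exp (ln (1 + f T1) + (k2 + 1) / d0)).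
    apply ln_increasing; [apply exp_pos |]. specialize (HT3f t ltac:(lra) Httm). lra. }
  specialize (Hg t ltac:(lra) Httm). specialize (Hle t ltac:(lra) Httm).
  assert (d0 * ((k2 + 1) / d0) < d0 * (ln (1 + f t) - ln (1 + f T1))) by (apply Rmult_lt_compat_l; lra).
  replace (d0 * ((k2 + 1) / d0)) with (k2 + 1) in * by (field; lra). lra.
Qed.

(** Once above [k2] (with [f >= F0]), [phi] never comes back down to [k1]:
    at a first touching point [phi_rate >= d0 > 0]. *)
Lemma phi_stays_large (T2 : R) : t0 < T2 -> k2 < phi T2 ->
  (forall s, T2 <= s -> Rbar_lt s tm -> F0 <= f s) ->
  forall t, T2 <= t -> Rbar_lt t tm -> k1 < phi t.
Proof.
  intros HT2 Hphi HF t Ht Htm'. destruct thresholds as [Hk [Hk1 [Hk2 [Hd0 Heps]]]].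
  apply (strict_lower_barrier T2 tm phi (fun t => f1 t / (1 + f t) * phi_rate t) k1); auto; try lra.
  - apply continuous_right_cont. eapply is_derive_continuous, phi_is_derive; auto.
    apply below_tm with t; auto.
  - intros s Hs Hstm. apply phi_is_derive; auto. lra.
  - intros s Hs Hstm _ Heq.
    assert (d0 <= phi_rate s) by (apply phi_rate_lower_bound; [lra | auto | apply HF; auto; lra | lra]).
    assert (Hf := f_ge_beta s ltac:(lra) Hstm).
    assert (0 < f1 s / (1 + f s)) by (apply Rdiv_lt_0_compat; [apply f1_pos |]; auto; lra).
    apply Rmult_lt_0_compat; lra.
Qed.

Lemma Lam_decay (T2 : R) : t0 < T2 -> Rbar_lt T2 tm ->
  (forall t, T2 <= t -> Rbar_lt t tm -> k1 < phi t) ->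
  forall t, T2 <= t -> Rbar_lt t tm ->
    Lam t + (1 - k / k1) * (ln (1 + f t) - ln (1 + f T2)) <= Lam T2.
Proof.
  intros HT2 HT2tm Hphi t Ht Htm'. destruct thresholds as [Hk [Hk1 [Hk2 [Hd0 Heps]]]].
  assert (H := comparison_of_deriv T2 tm (fun s => - Lam s)
    (fun s => - (theta * A * g_integrand s - f1 s / (1 + f s)))
    (fun s => ln (1 + f s)) (fun s => f1 s / (1 + f s)) (1 - k / k1)).
  cbv beta in H. enough (- Lam T2 + (1 - k / k1) * (ln (1 + f t) - ln (1 + f T2)) <= - Lam t) by lra.
  apply H; auto.
  - intros s Hs Hstm. apply (is_derive_opp (V:=R_NormedModule)), Lam_is_derive; auto. lra.
  - intros s Hs Hstm. apply log1pf_is_derive; auto. lra.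
  - intros s Hs Hstm.
    assert (Hf := f_ge_beta s ltac:(lra) Hstm). assert (Hf1 := f1_pos s ltac:(lra) Hstm).
    assert (Hps := Hphi s (Rlt_le _ _ Hs) Hstm).
    rewrite g_integrand_phi by (auto; lra). replace (theta * A) with k by (unfold k; ring).
    set (u := f1 s / (1 + f s)).
    assert (Hu : 0 < u) by (unfold u; apply Rdiv_lt_0_compat; lra).
    assert (u / phi s <= u / k1) by (unfold Rdiv; apply Rmult_le_compat_l; [lra |];
      apply Rinv_le_contravar; lra).
    assert (k * (u / phi s) <= k * (u / k1)) by (apply Rmult_le_compat_l; lra).
    assert (k * (u / k1) = (k / k1) * u) by (field; lra).
    lra.
Qed.

Lemma G_nondecreasing (t T : R) : t0 <= t -> t <= T -> Rbar_lt T tm -> G t <= G T.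
Proof.
  intros Ht HtT HT. apply (nondecreasing_closed t T G g_integrand); auto.
  - apply continuous_right_cont. eapply is_derive_continuous, G_is_derive, below_tm; eauto.
  - intros s Hs. apply G_is_derive, below_tm with T; auto; lra.
  - intros s Hs. left. apply g_integrand_continuous_pos, below_tm with T; auto; lra.
Qed.

Lemma Lam_upper_bound (T2 : R) : t0 < T2 -> Rbar_lt T2 tm ->
  (forall t, T2 <= t -> Rbar_lt t tm -> k1 < phi t) ->
  forall t, t0 <= t -> Rbar_lt t tm -> Lam t <= k * G T2.
Proof.
  intros HT2 HT2tm Hphi t Ht Htm'. destruct thresholds as [Hk [Hk1 [Hk2 [Hd0 Heps]]]].
  assert (HLam : forall s, t0 <= s -> Rbar_lt s tm -> s <= T2 -> Lam s <= k * G T2).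
  { intros s Hs Hstm HsT. unfold Lam. replace (theta * A) with k by (unfold k; ring).
    assert (G s <= G T2) by (apply G_nondecreasing; auto).
    assert (k * G s <= k * G T2) by (apply Rmult_le_compat_l; lra).
    generalize (log1pf_nonneg s Hs Hstm). lra. }
  destruct (Rle_or_lt t T2) as [h|h]; [apply HLam; auto |].
  assert (H1 := Lam_decay T2 HT2 HT2tm Hphi t (Rlt_le _ _ h) Htm').
  assert (ln (1 + f T2) <= ln (1 + f t)).
  { apply ln_le_compat; [generalize (f_ge_beta T2 ltac:(lra) HT2tm); lra |].
    apply Rplus_le_compat_l, f_nondecreasing; auto; lra. }
  assert (0 <= (1 - k / k1) * (ln (1 + f t) - ln (1 + f T2)))
    by (apply Rmult_le_pos; [generalize decay_rate_pos |]; lra).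
  generalize (HLam T2 ltac:(lra) HT2tm (Rle_refl _)). lra.
Qed.

Lemma eta_bounded : exists Cstar, 0 < Cstar /\
  forall t, Ico t0 tm t -> 0 < eta A theta t0 f t /\ eta A theta t0 f t <= Cstar.
Proof.
  destruct phi_eventually_large as [T2 [HT2 [HT2tm [Hphi HF]]]].
  assert (Hbig := phi_stays_large T2 HT2 Hphi HF).
  exists (exp (k * G T2)). split; [apply exp_pos |]. intros t [Ht Htm'].
  rewrite (eta_exp_Lam t Ht Htm'). split; [apply exp_pos |].
  apply exp_le_compat, (Lam_upper_bound T2); auto.
Qed.

Lemma eta_vanishes : filterlim (eta A theta t0 f) (to_left tm) (locally 0).
Proof.
  destruct phi_eventually_large as [T2 [HT2 [HT2tm [Hphi HF]]]].
  assert (Hbig := phi_stays_large T2 HT2 Hphi HF).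
  set (e1 := 1 - k / k1).
  assert (He1 : 0 < e1) by apply decay_rate_pos.
  apply filterlim_locally. intros e. assert (He : 0 < e) by apply cond_pos.
  set (U := (Lam T2 + e1 * ln (1 + f T2) - ln e) / e1).
  destruct (f_eventually_above (exp U)) as [T3 [HT3 [HT3tm HT3f]]].
  apply (to_left_of_tail (Rmax T2 T3)); [unfold Rmax; destruct (Rle_dec T2 T3); auto |].
  intros t Ht Htm'. assert (T2 <= t) by (generalize (Rmax_l T2 T3); lra).
  assert (Hft : exp U < f t) by (apply HT3f; auto; generalize (Rmax_r T2 T3); lra).
  change (Rabs (eta A theta t0 f t - 0) < e).
  rewrite (eta_exp_Lam t ltac:(lra) Htm'), Rminus_0_r, Rabs_right by (left; apply exp_pos).
  rewrite <- (exp_ln e) by auto. apply exp_increasing.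
  assert (HuU : U < ln (1 + f t)) by (rewrite <- (ln_exp U); apply ln_increasing; [apply exp_pos | lra]).
  assert (H1 := Lam_decay T2 HT2 HT2tm Hbig t ltac:(lra) Htm'). fold e1 in H1.
  assert (e1 * U < e1 * ln (1 + f t)) by (apply Rmult_lt_compat_l; auto).
  assert (e1 * U = Lam T2 + e1 * ln (1 + f T2) - ln e) by (unfold U; field; lra).
  lra.
Qed.

End Solution.

Lemma is_sol_explicit (a b c t0 beta beta0 : R) (tm : Rbar) (f : R -> R) :
  is_sol a b c t0 beta beta0 tm f ->
  exists f1 f2, deriv_within (Ico t0 tm) f f1 /\ deriv_within (Ico t0 tm) f1 f2 /\
    cont_within (Ico t0 tm) f2 /\ (forall t, Ico t0 tm t -> f2 t = Fode a b c t (f t) (f1 t)) /\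
    f t0 = beta /\ f1 t0 = beta0.
Proof.
  intros [f1 [f2 [D1 [D2 [C2 [Hode [H0 H1]]]]]]]. exists f1, f2. repeat split; auto.
  intros t Ht. destruct (Hode t Ht) as [_ E]. unfold Fode. lra.
Qed.

Theorem propositiont (a b c t0 beta beta0 : R) (tm : Rbar) (f : R -> R)
  (theta A : R) :
  1 < a -> 0 < b -> 1 < c -> c < 3 / 2 -> 0 < t0 -> 0 < beta -> 0 < beta0 ->
  is_max_sol a b c t0 beta beta0 tm f ->
  1 <= theta -> 0 < A -> A * theta < 2 * b / (3 - 2 * c) ->
  C1_on (Ico t0 tm) (eta A theta t0 f) /\
  (exists Cstar : R, 0 < Cstar /\
     forall t, Ico t0 tm t -> 0 < eta A theta t0 f t /\ eta A theta t0 f t <= Cstar) /\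
  filterlim (eta A theta t0 f)
    (to_left tm) (locally 0).
Proof.
  intros Ha Hb Hc1 Hc2 Ht0 Hbeta Hbeta0 [Htm [Hsol Hmax]] Hth HA Hk.
  destruct (is_sol_explicit a b c t0 beta beta0 tm f Hsol) as [f1 [f2 [D1 [D2 [C2 [Hode [H0 H1]]]]]]].
  assert (Hblow : filterlim f (to_left tm) (Rbar_locally p_infty))
    by (apply (f_blows_up a b c t0 beta beta0 tm f f1 f2); auto).
  split; [| split].
  - apply (eta_C1 a b c t0 beta beta0 tm f f1 f2); auto.
  - apply (eta_bounded a b c t0 beta beta0 tm f f1 f2); auto.
  - apply (eta_vanishes a b c t0 beta beta0 tm f f1 f2); auto.
Qed.
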